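(* Let $b>0$ and $c\ge1$ be constants, and for each $M\in\mathbb{N}$ let $a_M\in[1/2,1)$ with $a_M/(1-a_M)\le c^M$. Let $A_1=\{z\in\mathbb{R}^M:\sum_iz_i<0\}$, $A_2=\{z:\sum_iz_i\ge0\}$ and $$\tilde\pi(z)\propto a_MN_M(z;-b\mathbf{1}_M,I_M)\mathbf{1}_{A_1}(z)+(1-a_M)N_M(z;b\mathbf{1}_M,I_M)\mathbf{1}_{A_2}(z).$$ Let $\beta_0<\beta_1<\dots<\beta_N$ be the distinct elements of $\{M^{-(M-k)/M}:k=0,\dots,M\}\cup\{k/M:k=1,\dots,M\}$ in increasing order, and $\pi_k\propto\tilde\pi^{\beta_k}$. Then for $\mathcal{A}=\{A_1,\dots,A_2\}$: $\pi_k[A_1]$ is nondecreasing in $k$, $\gamma(\mathcal{A})\ge1/2$, and $\delta(\mathcal{A})\ge\frac{1}{2c\sqrt M}$.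
   Context: $N_M(z;\nu,\Sigma)$ is the $M$-variate normal density; $\mathbf{1}_M$ the all-ones vector; $I_M$ the identity; Lebesgue measure on $\mathbb{R}^M$; $\pi_k[A]=\int_A\pi_k$. Overlap $\delta(\mathcal{A})=\min_{|k-l|=1,\,j}\frac{1}{\pi_k[A_j]}\int_{A_j}\min\{\pi_k,\pi_l\}$ with $k,l\in\{0,\dots,N\}$; $\gamma(\mathcal{A})=\min_j\prod_{k=1}^N\min\{1,\pi_{k-1}[A_j]/\pi_k[A_j]\}$. *)

From Stdlib Require Import Reals Lra ClassicalEpsilon.
Open Scope R_scope.

(* Points of R^M are represented as z : nat -> R; only z 0, ..., z (M-1) matter. *)

Fixpoint sumM (M : nat) (g : nat -> R) : R :=
  match M with O => 0 | S m => sumM m g + g m end.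

Fixpoint prod1N (N : nat) (h : nat -> R) : R :=
  match N with O => 1 | S n => prod1N n h * h (S n) end.

Definition vcons (x : R) (v : nat -> R) : nat -> R :=
  fun i => match i with O => x | S j => v j end.

Definition improper_int_is (f : R -> R) (l : R) : Prop :=
  forall eps, 0 < eps -> exists T, forall lo hi, lo <= - T -> T <= hi ->
    exists pr : Riemann_integrable f lo hi, Rabs (RiemannInt pr - l) < eps.

Definition Int1 (f : R -> R) : R := epsilon (inhabits 0) (improper_int_is f).

(* Lebesgue integral over R^M of a nonnegative function, computed as an
   iterated integral (Tonelli). *)
Fixpoint IntRM (M : nat) (F : (nat -> R) -> R) : R :=
  match M with
  | O => F (fun _ => 0)
  | S m => Int1 (fun x => IntRM m (fun v => F (vcons x v)))
  end.

Definition normal_iso (M : nat) (mu : nat -> R) (z : nat -> R) : R :=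
  / Rpower (2 * PI) (INR M / 2) * exp (- (1/2) * sumM M (fun i => (z i - mu i) ^ 2)).

Definition indA (M : nat) (j : nat) (z : nat -> R) : R :=
  match j with
  | 1%nat => if Rlt_dec (sumM M z) 0 then 1 else 0
  | _ => if Rle_dec 0 (sumM M z) then 1 else 0
  end.

Definition pitilde_un (M : nat) (b a : R) (z : nat -> R) : R :=
  a * normal_iso M (fun _ => - b) z * indA M 1 z
  + (1 - a) * normal_iso M (fun _ => b) z * indA M 2 z.

Definition pitilde (M : nat) (b a : R) (z : nat -> R) : R :=
  pitilde_un M b a z / IntRM M (pitilde_un M b a).

Definition pi_temp (M : nat) (b a beta : R) (z : nat -> R) : R :=
  Rpower (pitilde M b a z) beta / IntRM M (fun y => Rpower (pitilde M b a y) beta).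

Definition prob (M : nat) (b a beta : R) (j : nat) : R :=
  IntRM M (fun z => indA M j z * pi_temp M b a beta z).

Definition gammaA (M : nat) (b a : R) (N : nat) (beta : nat -> R) : R :=
  let g j := prod1N N (fun k => Rmin 1 (prob M b a (beta (k - 1)%nat) j / prob M b a (beta k) j)) in
  Rmin (g 1%nat) (g 2%nat).

(* the quantity inside the min defining delta(A) *)
Definition overlap (M : nat) (b a betak betal : R) (j : nat) : R :=
  / prob M b a betak j *
  IntRM M (fun z => indA M j z * Rmin (pi_temp M b a betak z) (pi_temp M b a betal z)).

Definition in_beta_set (M : nat) (x : R) : Prop :=
  (exists k, (k <= M)%nat /\ x = Rpower (INR M) (- (INR M - INR k) / INR M))
  \/ (exists k, (1 <= k <= M)%nat /\ x = INR k / INR M).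

From Stdlib Require Import Reals Lra Lia ClassicalEpsilon Classical FunctionalExtensionality.
From Coquelicot Require Import Coquelicot.
Open Scope R_scope.

(* On each half-space the tempered density is a Gaussian restricted to that half-space, and the
   reflection [z -> - z] shows that both restricted Gaussians have the same mass [G beta].  Hence
   [pi_beta[A_1] = sigmoid (beta L)] with [L = ln (a / (1 - a))] in [[0, M ln c]]: it increases with
   [beta], the [A_2]-factors of [gamma] are [1], and the [A_1]-factors telescope to
   [pi_0[A_1] / pi_N[A_1] >= 1/2].  For [delta], the minimum of the two Gaussians at neighbouring
   temperatures dominates the colder one times the smaller weight, so the overlap is bounded by ratios
   of weights and of masses.  The ladder contains the grids [{k/M}] and [{M^(-(M-k)/M)}], so
   neighbouring temperatures differ by at most [1/M] and have ratio at most [M^(1/M)]; the weights then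
   change by at most a factor [c], and scaling gives
   [G beta' >= (beta/beta')^(M/2) G beta >= G beta / sqrt M]. *)

(** * Improper integrals on R *)

Definition is_improper_int (f : R -> R) (l : R) : Prop :=
  forall eps, 0 < eps -> exists T, 0 <= T /\ forall lo hi, lo <= - T -> T <= hi ->
    ex_RInt f lo hi /\ Rabs (RInt f lo hi - l) < eps.

Lemma improper_int_is_of_is_improper_int f l : is_improper_int f l -> improper_int_is f l.
Proof.
  intros H eps Heps. destruct (H eps Heps) as [T [_ HT]]. exists T. intros lo hi Hlo Hhi.
  destruct (HT lo hi Hlo Hhi) as [Hex Hl].
  exists (ex_RInt_Reals_0 _ _ _ Hex). rewrite <- RInt_Reals. exact Hl.
Qed.

Lemma is_improper_int_of_improper_int_is f l : improper_int_is f l -> is_improper_int f l.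
Proof.
  intros H eps Heps. destruct (H eps Heps) as [T HT]. exists (Rabs T). split; [apply Rabs_pos|].
  intros lo hi Hlo Hhi. pose proof (Rle_abs T). pose proof (Rle_abs (- T)). rewrite Rabs_Ropp in *.
  destruct (HT lo hi ltac:(lra) ltac:(lra)) as [pr Hpr].
  split; [exact (ex_RInt_Reals_1 _ _ _ pr)|]. rewrite (RInt_Reals _ _ _ pr). exact Hpr.
Qed.

Lemma is_improper_int_le f g l l' :
  (forall x, f x <= g x) -> is_improper_int f l -> is_improper_int g l' -> l <= l'.
Proof.
  intros Hle H H'. apply Rnot_lt_le. intro Hlt.
  destruct (H ((l - l') / 2)) as [T [HT0 HT]]; [lra|].
  destruct (H' ((l - l') / 2)) as [T' [HT0' HT']]; [lra|].
  pose proof (Rmax_l T T'); pose proof (Rmax_r T T'). set (U := Rmax T T') in *.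
  destruct (HT (- U) U) as [E1 A1]; try lra. destruct (HT' (- U) U) as [E2 A2]; try lra.
  assert (RInt f (- U) U <= RInt g (- U) U) by (apply RInt_le; auto; lra).
  apply Rabs_def2 in A1. apply Rabs_def2 in A2. lra.
Qed.

Lemma is_improper_int_unique f l l' : is_improper_int f l -> is_improper_int f l' -> l = l'.
Proof.
  intros H H'. apply Rle_antisym; [apply (is_improper_int_le f f) | apply (is_improper_int_le f f)];
    auto; intro; apply Rle_refl.
Qed.

Lemma Int1_correct f l : is_improper_int f l -> Int1 f = l.
Proof.
  intro H. unfold Int1. apply (is_improper_int_unique f); [|exact H].
  apply is_improper_int_of_improper_int_is, epsilon_spec.
  exists l. apply improper_int_is_of_is_improper_int, H.
Qed.

Lemma is_improper_int_Int1 f : (exists l, is_improper_int f l) -> is_improper_int f (Int1 f).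
Proof. intros [l H]. rewrite (Int1_correct f l H). exact H. Qed.

Lemma is_improper_int_ext f g l : (forall x, f x = g x) -> is_improper_int f l -> is_improper_int g l.
Proof. intros E H. replace g with f; auto. apply functional_extensionality, E. Qed.

Lemma is_improper_int_plus f g l l' : is_improper_int f l -> is_improper_int g l' ->
  is_improper_int (fun x => f x + g x) (l + l').
Proof.
  intros H H' eps Heps.
  destruct (H (eps / 2)) as [T [HT0 HT]]; [lra|]. destruct (H' (eps / 2)) as [T' [HT0' HT']]; [lra|].
  exists (Rmax T T'). pose proof (Rmax_l T T'); pose proof (Rmax_r T T'). split; [lra|].
  intros lo hi Hlo Hhi.
  destruct (HT lo hi) as [E1 A1]; try lra. destruct (HT' lo hi) as [E2 A2]; try lra.
  split; [apply (ex_RInt_plus f g); auto|].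
  rewrite (RInt_plus f g) by auto.
  change (plus (RInt f lo hi) (RInt g lo hi)) with (RInt f lo hi + RInt g lo hi).
  replace (RInt f lo hi + RInt g lo hi - (l + l')) with ((RInt f lo hi - l) + (RInt g lo hi - l')) by ring.
  eapply Rle_lt_trans; [apply Rabs_triang|]. lra.
Qed.

Lemma is_improper_int_scal c f l : is_improper_int f l -> is_improper_int (fun x => c * f x) (c * l).
Proof.
  intros H eps Heps. pose proof (Rabs_pos c).
  destruct (H (eps / (Rabs c + 1))) as [T [HT0 HT]]; [apply Rdiv_lt_0_compat; lra|].
  exists T. split; auto. intros lo hi Hlo Hhi. destruct (HT lo hi Hlo Hhi) as [E A].
  split; [exact (ex_RInt_scal f lo hi c E)|].
  rewrite (RInt_scal f lo hi c E : RInt (fun x => c * f x) lo hi = c * RInt f lo hi).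
  replace (c * RInt f lo hi - c * l) with (c * (RInt f lo hi - l)) by ring.
  rewrite Rabs_mult. pose proof (Rabs_pos (RInt f lo hi - l)).
  apply Rle_lt_trans with ((Rabs c + 1) * Rabs (RInt f lo hi - l)); [nra|].
  apply Rmult_lt_reg_l with (/ (Rabs c + 1)); [apply Rinv_0_lt_compat; lra|].
  rewrite <- Rmult_assoc, Rinv_l by lra. lra.
Qed.

Lemma is_improper_int_minus f g l l' : is_improper_int f l -> is_improper_int g l' ->
  is_improper_int (fun x => f x + -1 * g x) (l - l').
Proof.
  intros H H'. replace (l - l') with (l + -1 * l') by ring.
  apply is_improper_int_plus, is_improper_int_scal; auto.
Qed.

Lemma ex_RInt_of_is_improper_int f l a b : is_improper_int f l -> a <= b -> ex_RInt f a b.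
Proof.
  intros H Hab. destruct (H 1 Rlt_0_1) as [T [_ HT]].
  pose proof (Rmin_l a (- T)). pose proof (Rmin_r a (- T)). pose proof (Rmax_l b T). pose proof (Rmax_r b T).
  destruct (HT (Rmin a (- T)) (Rmax b T)) as [E _]; try lra.
  apply (ex_RInt_Chasles_2 f (Rmin a (- T)) a b); [lra|].
  apply (ex_RInt_Chasles_1 f (Rmin a (- T)) b (Rmax b T)); [lra | exact E].
Qed.

Lemma RInt_le_is_improper_int f l lo hi : (forall x, 0 <= f x) -> is_improper_int f l -> lo <= hi ->
  RInt f lo hi <= l.
Proof.
  intros Hpos H Hlh. apply Rnot_lt_le. intro Hlt.
  destruct (H (RInt f lo hi - l)) as [T [HT0 HT]]; [lra|].
  set (r := Rmax T (Rmax (- lo) hi)).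
  pose proof (Rmax_l T (Rmax (- lo) hi)). pose proof (Rmax_r T (Rmax (- lo) hi)).
  pose proof (Rmax_l (- lo) hi). pose proof (Rmax_r (- lo) hi).
  destruct (HT (- r) r) as [Ex A]; try (unfold r; lra).
  assert (Ex1 : ex_RInt f (- r) lo) by (apply (ex_RInt_Chasles_1 f (- r) lo r); auto; unfold r; lra).
  assert (Ex2 : ex_RInt f lo r) by (apply (ex_RInt_Chasles_2 f (- r) lo r); auto; unfold r; lra).
  assert (Ex3 : ex_RInt f lo hi) by (apply (ex_RInt_Chasles_1 f lo hi r); auto; unfold r; lra).
  assert (Ex4 : ex_RInt f hi r) by (apply (ex_RInt_Chasles_2 f lo hi r); auto; unfold r; lra).
  rewrite <- (RInt_Chasles f (- r) lo r), <- (RInt_Chasles f lo hi r) in A by auto.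
  change (Rabs (RInt f (- r) lo + (RInt f lo hi + RInt f hi r) - l) < RInt f lo hi - l) in A.
  assert (0 <= RInt f (- r) lo) by (apply RInt_ge_0; auto; unfold r; lra).
  assert (0 <= RInt f hi r) by (apply RInt_ge_0; auto; unfold r; lra).
  apply Rabs_def2 in A. lra.
Qed.

Lemma is_improper_int_ge_0 f l : (forall x, 0 <= f x) -> is_improper_int f l -> 0 <= l.
Proof.
  intros Hpos H. pose proof (RInt_le_is_improper_int f l 0 0 Hpos H (Rle_refl 0)) as H0.
  rewrite RInt_point in H0. exact H0.
Qed.

Lemma is_improper_int_abs_le f g l l' : (forall x, Rabs (f x) <= g x) ->
  is_improper_int f l -> is_improper_int g l' -> Rabs l <= l'.
Proof.
  intros Hb H H'. apply Rabs_le. split.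
  - replace (- l') with (-1 * l') by ring.
    apply (is_improper_int_le (fun x => -1 * g x) f); [| apply is_improper_int_scal | ]; auto.
    intro x. specialize (Hb x). apply Rabs_le_between in Hb. lra.
  - apply (is_improper_int_le f g); auto. intro x. specialize (Hb x). apply Rabs_le_between in Hb. lra.
Qed.

Lemma is_improper_int_lb f l a c : is_improper_int f l -> (forall x, 0 <= f x) ->
  (forall x, a < x < a + 1 -> c <= f x) -> c <= l.
Proof.
  intros H Hpos Hc. apply Rle_trans with (RInt f a (a + 1)).
  - apply Rle_trans with (RInt (fun _ => c) a (a + 1)).
    + rewrite RInt_const. change (scal (a + 1 - a) c) with ((a + 1 - a) * c). lra.
    + apply RInt_le; [lra | apply ex_RInt_const | apply (ex_RInt_of_is_improper_int f l); auto; lra |].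
      intros; apply Hc; auto.
  - apply RInt_le_is_improper_int; auto. lra.
Qed.

Lemma is_improper_int_comp_lin f l u v : 0 < u -> is_improper_int f l ->
  is_improper_int (fun x => f (u * x + v)) (l / u).
Proof.
  intros Hu H eps Heps.
  destruct (H (eps * u)) as [T [HT0 HT]]; [nra|].
  pose proof (Rabs_pos v). pose proof (Rle_abs v). pose proof (Rle_abs (- v)). rewrite Rabs_Ropp in *.
  exists ((T + Rabs v) / u). split; [apply Rdiv_le_0_compat; lra|].
  intros lo hi Hlo Hhi.
  apply Rmult_le_compat_l with (r := u) in Hlo; [|lra].
  apply Rmult_le_compat_l with (r := u) in Hhi; [|lra].
  replace (u * - ((T + Rabs v) / u)) with (- (T + Rabs v)) in Hlo by (field; lra).
  replace (u * ((T + Rabs v) / u)) with (T + Rabs v) in Hhi by (field; lra).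
  destruct (HT (u * lo + v) (u * hi + v)) as [E A]; try lra.
  assert (Ec : ex_RInt (fun y => u * f (u * y + v)) lo hi) by exact (ex_RInt_comp_lin f u v lo hi E).
  assert (Eq : RInt (fun y => u * f (u * y + v)) lo hi = RInt f (u * lo + v) (u * hi + v))
    by exact (RInt_comp_lin f u v lo hi E).
  assert (Ef : ex_RInt (fun y => f (u * y + v)) lo hi).
  { eapply ex_RInt_ext; [|exact (ex_RInt_scal _ lo hi (/ u) Ec)].
    intros x _. change (/ u * (u * f (u * x + v)) = f (u * x + v)). field. lra. }
  split; [exact Ef|].
  rewrite (RInt_scal _ lo hi u Ef : RInt (fun y => u * f (u * y + v)) lo hi =
                                    u * RInt (fun y => f (u * y + v)) lo hi) in Eq.
  replace (RInt (fun y => f (u * y + v)) lo hi - l / u) with (/ u * (RInt f (u * lo + v) (u * hi + v) - l))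
    by (rewrite <- Eq; field; lra).
  rewrite Rabs_mult, Rabs_right by (left; apply Rinv_0_lt_compat; lra).
  apply Rmult_lt_reg_l with u; auto. rewrite <- Rmult_assoc, Rinv_r by lra. lra.
Qed.

Lemma is_improper_int_comp_opp f l : is_improper_int f l -> is_improper_int (fun x => f (- x)) l.
Proof.
  intros H eps Heps. destruct (H eps Heps) as [T [HT0 HT]]. exists T. split; auto.
  intros lo hi Hlo Hhi. destruct (HT (- hi) (- lo)) as [E A]; try lra.
  assert (I : is_RInt (fun x => f (- x)) lo hi (RInt f (- hi) (- lo))).
  { pose proof (is_RInt_opp _ _ _ _ (is_RInt_comp_opp _ _ _ _ (is_RInt_swap _ _ _ _ (RInt_correct _ _ _ E)))) as I.
    eapply is_RInt_ext; [|rewrite <- (opp_opp (RInt f (- hi) (- lo))); exact I].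
    intros x _. apply opp_opp. }
  split; [eexists; exact I|]. rewrite (is_RInt_unique _ _ _ _ I). exact A.
Qed.

Lemma is_improper_int_ext_but_point f g l x0 : (forall x, x <> x0 -> f x = g x) ->
  is_improper_int f l -> is_improper_int g l.
Proof.
  intros Hfg H eps Heps. destruct (H eps Heps) as [T [HT0 HT]].
  pose proof (Rabs_pos x0). pose proof (Rle_abs x0). pose proof (Rle_abs (- x0)). rewrite Rabs_Ropp in *.
  exists (T + Rabs x0 + 1). split; [lra|]. intros lo hi Hlo Hhi.
  destruct (HT lo hi) as [E A]; try lra.
  assert (Left : forall x, Rmin lo x0 < x < Rmax lo x0 -> f x = g x).
  { intros x Hx. rewrite Rmin_left, Rmax_right in Hx by lra. apply Hfg; lra. }
  assert (Right : forall x, Rmin x0 hi < x < Rmax x0 hi -> f x = g x).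
  { intros x Hx. rewrite Rmin_left, Rmax_right in Hx by lra. apply Hfg; lra. }
  assert (E1 : ex_RInt f lo x0) by (apply (ex_RInt_Chasles_1 f lo x0 hi); auto; lra).
  assert (E2 : ex_RInt f x0 hi) by (apply (ex_RInt_Chasles_2 f lo x0 hi); auto; lra).
  assert (G1 : ex_RInt g lo x0) by exact (ex_RInt_ext f g lo x0 Left E1).
  assert (G2 : ex_RInt g x0 hi) by exact (ex_RInt_ext f g x0 hi Right E2).
  split; [exact (ex_RInt_Chasles g lo x0 hi G1 G2)|].
  rewrite <- (RInt_Chasles g lo x0 hi G1 G2), <- (RInt_ext f g lo x0 Left), <- (RInt_ext f g x0 hi Right).
  change (Rabs (RInt f lo x0 + RInt f x0 hi - l) < eps).
  rewrite (RInt_Chasles f lo x0 hi E1 E2 : RInt f lo x0 + RInt f x0 hi = RInt f lo hi). exact A.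
Qed.

Lemma is_improper_int_indicator f p q : p <= q ->
  (forall x, x < p -> f x = 0) -> (forall x, p < x < q -> f x = 1) -> (forall x, q < x -> f x = 0) ->
  is_improper_int f (q - p).
Proof.
  intros Hpq H1 H2 H3 eps Heps.
  pose proof (Rabs_pos p); pose proof (Rabs_pos q).
  pose proof (Rle_abs p); pose proof (Rle_abs (- p)); pose proof (Rle_abs q); pose proof (Rle_abs (- q)).
  rewrite !Rabs_Ropp in *.
  exists (Rabs p + Rabs q + 1). split; [lra|]. intros lo hi Hlo Hhi.
  assert (Const : forall a b c : R, is_RInt (fun _ => c) a b ((b - a) * c)) by exact is_RInt_const.
  assert (I1 : is_RInt f lo p 0).
  { rewrite <- (Rmult_0_r (p - lo)). apply (is_RInt_ext (fun _ => 0)); [|apply Const].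
    intros x Hx. rewrite Rmax_right in Hx by lra. symmetry; apply H1; lra. }
  assert (I2 : is_RInt f p q (q - p)).
  { rewrite <- (Rmult_1_r (q - p)). apply (is_RInt_ext (fun _ => 1)); [|apply Const].
    intros x Hx. rewrite Rmin_left, Rmax_right in Hx by lra. symmetry; apply H2; lra. }
  assert (I3 : is_RInt f q hi 0).
  { rewrite <- (Rmult_0_r (hi - q)). apply (is_RInt_ext (fun _ => 0)); [|apply Const].
    intros x Hx. rewrite Rmin_left in Hx by lra. symmetry; apply H3; lra. }
  pose proof (is_RInt_Chasles _ _ _ _ _ _ (is_RInt_Chasles _ _ _ _ _ _ I1 I2) I3) as I.
  split; [eexists; exact I|]. rewrite (is_RInt_unique _ _ _ _ I).
  change (Rabs (0 + (q - p) + 0 - (q - p)) < eps). replace (0 + (q - p) + 0 - (q - p)) with 0 by ring.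
  rewrite Rabs_R0. exact Heps.
Qed.

Lemma ex_improper_int_of_bounded f B : (forall lo hi, ex_RInt f lo hi) -> (forall x, 0 <= f x) ->
  (forall lo hi, lo <= hi -> RInt f lo hi <= B) -> exists l, is_improper_int f l.
Proof.
  intros Hex Hpos Hb.
  assert (Mono : forall lo hi lo' hi', lo' <= lo -> lo <= hi -> hi <= hi' -> RInt f lo hi <= RInt f lo' hi').
  { intros lo hi lo' hi' H1 H2 H3.
    rewrite <- (RInt_Chasles f lo' lo hi') by auto. rewrite <- (RInt_Chasles f lo hi hi') by auto.
    change (RInt f lo hi <= RInt f lo' lo + (RInt f lo hi + RInt f hi hi')).
    assert (0 <= RInt f lo' lo) by (apply RInt_ge_0; auto). assert (0 <= RInt f hi hi') by (apply RInt_ge_0; auto).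
    lra. }
  set (E := fun y => exists r, 0 <= r /\ y = RInt f (- r) r).
  assert (Hbd : bound E) by (exists B; intros y [r [Hr ->]]; apply Hb; lra).
  assert (Hne : exists y, E y) by (exists (RInt f (- 0) 0); exists 0; split; auto; lra).
  destruct (completeness E Hbd Hne) as [l [Hub Hlub]].
  exists l. intros eps Heps.
  assert (Hclose : exists y, E y /\ l - eps < y).
  { apply not_all_not_ex. intro Hn. assert (l <= l - eps); [|lra].
    apply Hlub. intros y Hy. apply Rnot_lt_le. intro. apply (Hn y); auto. }
  destruct Hclose as [y [[r [Hr ->]] Hy]].
  exists r. split; auto. intros lo hi Hlo Hhi. split; auto.
  set (r' := Rmax (- lo) hi). pose proof (Rmax_l (- lo) hi); pose proof (Rmax_r (- lo) hi).
  assert (RInt f (- r) r <= RInt f lo hi) by (apply Mono; lra).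
  assert (RInt f lo hi <= RInt f (- r') r') by (apply Mono; unfold r'; lra).
  assert (RInt f (- r') r' <= l) by (apply Hub; exists r'; split; [unfold r'; lra | reflexivity]).
  apply Rabs_def1; lra.
Qed.

Lemma ex_RInt_piecewise (f g h : R -> R) c :
  (forall x, x < c -> f x = g x) -> (forall x, c < x -> f x = h x) ->
  (forall lo hi, ex_RInt g lo hi) -> (forall lo hi, ex_RInt h lo hi) ->
  forall lo hi, ex_RInt f lo hi.
Proof.
  intros Hg Hh Eg Eh.
  assert (Below : forall lo hi, lo <= c -> hi <= c -> ex_RInt f lo hi).
  { intros lo hi Hlo Hhi. eapply ex_RInt_ext; [|apply (Eg lo hi)].
    intros x Hx. symmetry; apply Hg. apply Rlt_le_trans with (Rmax lo hi); [lra|]. now apply Rmax_lub. }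
  assert (Above : forall lo hi, c <= lo -> c <= hi -> ex_RInt f lo hi).
  { intros lo hi Hlo Hhi. eapply ex_RInt_ext; [|apply (Eh lo hi)].
    intros x Hx. symmetry; apply Hh. apply Rle_lt_trans with (Rmin lo hi); [|lra]. now apply Rmin_glb. }
  intros lo hi. apply (ex_RInt_Chasles f lo c hi).
  - destruct (Rle_dec lo c); [apply Below; lra | apply ex_RInt_swap, Above; lra].
  - destruct (Rle_dec hi c); [apply ex_RInt_swap, Below; lra | apply Above; lra].
Qed.

(** * Gaussians *)

Definition gauss (be mu x : R) : R := exp (- (be / 2) * (x - mu) ^ 2).

Lemma gauss_continuous be mu x : continuous (gauss be mu) x.
Proof. apply continuity_pt_filterlim. unfold gauss. reg. Qed.

Lemma gauss_pos be mu x : 0 < gauss be mu x.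
Proof. apply exp_pos. Qed.

Lemma exp_le_compat x y : x <= y -> exp x <= exp y.
Proof. intro H. destruct (Req_dec x y) as [->|]; [lra|]. left; apply exp_increasing; lra. Qed.

Lemma gauss_le_1 be mu x : 0 <= be -> gauss be mu x <= 1.
Proof.
  intro H. unfold gauss. rewrite <- exp_0. apply exp_le_compat.
  pose proof (pow2_ge_0 (x - mu)). nra.
Qed.

Lemma gauss_opp be mu x : gauss be (- mu) (- x) = gauss be mu x.
Proof. unfold gauss. f_equal. ring. Qed.

Lemma gauss_scale be mu x : 0 < be -> gauss be mu x = gauss 1 0 (sqrt be * x + - (sqrt be * mu)).
Proof.
  intro Hb. unfold gauss. f_equal.
  replace ((sqrt be * x + - (sqrt be * mu) - 0) ^ 2) with (sqrt be ^ 2 * (x - mu) ^ 2) by ring.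
  replace (sqrt be ^ 2) with be; [field|].
  rewrite <- Rsqr_pow2, Rsqr_sqrt; lra.
Qed.

Lemma gauss_std_le x : gauss 1 0 x <= 2 / (1 + x ^ 2).
Proof.
  unfold gauss. pose proof (pow2_ge_0 x). pose proof (exp_ineq1_le ((1 / 2) * x ^ 2)).
  replace (- (1 / 2) * (x - 0) ^ 2) with (- ((1 / 2) * x ^ 2)) by ring. rewrite exp_Ropp.
  apply Rle_trans with (/ (1 + (1 / 2) * x ^ 2)); [apply Rinv_le_contravar; lra|].
  apply Rmult_le_reg_l with ((1 + x ^ 2) * (1 + (1 / 2) * x ^ 2)); [nra|].
  field_simplify; nra.
Qed.

(* [2 / (1 + x^2)] is the derivative of [2 atan], so all partial integrals stay below [2 PI]. *)
Lemma ex_improper_int_gauss_std : exists l, is_improper_int (gauss 1 0) l.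
Proof.
  apply (ex_improper_int_of_bounded _ (2 * PI)).
  - intros lo hi. apply (@ex_RInt_continuous R_CompleteNormedModule). intros; apply gauss_continuous.
  - intro; left; apply gauss_pos.
  - intros lo hi Hlh.
    assert (Hd : forall x, Rmin lo hi <= x <= Rmax lo hi -> is_derive (fun y => 2 * atan y) x (2 / (1 + x ^ 2))).
    { intros x _. replace (2 / (1 + x ^ 2)) with (2 * / (1 + x²)) by (unfold Rsqr; field; nra).
      exact (is_derive_scal atan x 2 _ (is_derive_atan x)). }
    assert (Hc : forall x, Rmin lo hi <= x <= Rmax lo hi -> continuous (fun x => 2 / (1 + x ^ 2)) x).
    { intros. apply continuity_pt_filterlim. reg. nra. }
    pose proof (is_RInt_derive _ _ lo hi Hd Hc) as HI.
    apply Rle_trans with (RInt (fun x => 2 / (1 + x ^ 2)) lo hi).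
    + apply RInt_le; auto; [| eexists; exact HI | intros; apply gauss_std_le].
      apply (@ex_RInt_continuous R_CompleteNormedModule). intros; apply gauss_continuous.
    + rewrite (is_RInt_unique _ _ _ _ HI). change (minus (2 * atan hi) (2 * atan lo)) with (2 * atan hi - 2 * atan lo).
      pose proof (atan_bound hi); pose proof (atan_bound lo). lra.
Qed.

Definition gauss_mass (be : R) : R := Int1 (gauss 1 0) / sqrt be.

Lemma is_improper_int_gauss be mu : 0 < be -> is_improper_int (gauss be mu) (gauss_mass be).
Proof.
  intro Hb. eapply is_improper_int_ext; [intro x; symmetry; apply (gauss_scale be mu x Hb)|].
  apply is_improper_int_comp_lin; [apply sqrt_lt_R0; exact Hb|].
  apply is_improper_int_Int1, ex_improper_int_gauss_std.
Qed.

Lemma gauss_mass_ge_0 be : 0 < be -> 0 <= gauss_mass be.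
Proof.
  intro Hb. apply (is_improper_int_ge_0 (gauss be 0)); [intro; left; apply gauss_pos|].
  apply is_improper_int_gauss, Hb.
Qed.

(** * Iterated integrals *)

(* [IntRM] is built from [Int1], a choice over a possibly empty set of limits; it is meaningful
   (linear, monotone) only when every slice is improperly integrable at every level. *)
Fixpoint iter_integrable (m : nat) (F : (nat -> R) -> R) : Prop :=
  match m with
  | O => True
  | S m' => (forall x, iter_integrable m' (fun v => F (vcons x v))) /\
            exists l, is_improper_int (fun x => IntRM m' (fun v => F (vcons x v))) l
  end.

Lemma is_improper_int_IntRM_S m F : iter_integrable (S m) F ->
  is_improper_int (fun x => IntRM m (fun v => F (vcons x v))) (IntRM (S m) F).
Proof. intros [_ H]. apply is_improper_int_Int1, H. Qed.

Lemma IntRM_ext m F G : (forall z, F z = G z) -> IntRM m F = IntRM m G.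
Proof. intro E. replace G with F; auto. apply functional_extensionality, E. Qed.

Lemma iter_integrable_ext m F G : (forall z, F z = G z) -> iter_integrable m F -> iter_integrable m G.
Proof. intros E H. replace G with F; auto. apply functional_extensionality, E. Qed.

Lemma iter_integrable_plus_IntRM m : forall F G, iter_integrable m F -> iter_integrable m G ->
  iter_integrable m (fun z => F z + G z) /\ IntRM m (fun z => F z + G z) = IntRM m F + IntRM m G.
Proof.
  induction m as [|m IH]; intros F G HF HG; [split; reflexivity|].
  pose proof (is_improper_int_IntRM_S m F HF) as IF. pose proof (is_improper_int_IntRM_S m G HG) as IG.
  destruct HF as [HF _], HG as [HG _].
  assert (I : is_improper_int (fun x => IntRM m (fun v => F (vcons x v) + G (vcons x v)))
                (IntRM (S m) F + IntRM (S m) G)).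
  { eapply is_improper_int_ext; [|exact (is_improper_int_plus _ _ _ _ IF IG)].
    intro x. symmetry. apply (IH _ _ (HF x) (HG x)). }
  split; [split; [intro x; apply (IH _ _ (HF x) (HG x)) | eexists; exact I] | apply Int1_correct, I].
Qed.

Lemma iter_integrable_scal_IntRM m : forall c F, iter_integrable m F ->
  iter_integrable m (fun z => c * F z) /\ IntRM m (fun z => c * F z) = c * IntRM m F.
Proof.
  induction m as [|m IH]; intros c F HF; [split; reflexivity|].
  pose proof (is_improper_int_IntRM_S m F HF) as IF. destruct HF as [HF _].
  assert (I : is_improper_int (fun x => IntRM m (fun v => c * F (vcons x v))) (c * IntRM (S m) F)).
  { eapply is_improper_int_ext; [|exact (is_improper_int_scal c _ _ IF)].
    intro x. symmetry. apply (IH _ _ (HF x)). }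
  split; [split; [intro x; apply (IH _ _ (HF x)) | eexists; exact I] | apply Int1_correct, I].
Qed.

Lemma iter_integrable_plus m F G : iter_integrable m F -> iter_integrable m G ->
  iter_integrable m (fun z => F z + G z).
Proof. intros HF HG. apply (iter_integrable_plus_IntRM m F G HF HG). Qed.

Lemma IntRM_plus m F G : iter_integrable m F -> iter_integrable m G ->
  IntRM m (fun z => F z + G z) = IntRM m F + IntRM m G.
Proof. intros HF HG. apply (iter_integrable_plus_IntRM m F G HF HG). Qed.

Lemma iter_integrable_scal m c F : iter_integrable m F -> iter_integrable m (fun z => c * F z).
Proof. intro HF. apply (iter_integrable_scal_IntRM m c F HF). Qed.

Lemma IntRM_scal m c F : iter_integrable m F -> IntRM m (fun z => c * F z) = c * IntRM m F.
Proof. intro HF. apply (iter_integrable_scal_IntRM m c F HF). Qed.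

Lemma IntRM_le m : forall F G, iter_integrable m F -> iter_integrable m G -> (forall z, F z <= G z) ->
  IntRM m F <= IntRM m G.
Proof.
  induction m as [|m IH]; intros F G HF HG Hle; [apply Hle|].
  pose proof (is_improper_int_IntRM_S m F HF) as IF. pose proof (is_improper_int_IntRM_S m G HG) as IG.
  destruct HF as [HF _], HG as [HG _].
  exact (is_improper_int_le _ _ _ _ (fun x => IH _ _ (HF x) (HG x) (fun v => Hle (vcons x v))) IF IG).
Qed.

(** * Gaussians cut by a half-space and a ball *)

Definition ind_lt (x y : R) : R := if Rlt_dec x y then 1 else 0.
Definition ind_le (x y : R) : R := if Rle_dec x y then 1 else 0.
Definition dist2 (m : nat) (mu : R) (v : nat -> R) : R := sumM m (fun i => (v i - mu) ^ 2).

(* The Gaussian restricted to [{sum v < s}] ([dir]) or [{s <= sum v}] and, if [ball], to the ball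
   [dist2 < r]; the ball arises when taking the minimum of Gaussians at two temperatures. *)
Definition cut_gauss (m : nat) (be mu r s : R) (ball dir : bool) (v : nat -> R) : R :=
  exp (- (be / 2) * dist2 m mu v) * (if ball then ind_lt (dist2 m mu v) r else 1) *
  (if dir then ind_lt (sumM m v) s else ind_le s (sumM m v)).

Definition cut_gauss_mass (m : nat) (be mu r s : R) (ball dir : bool) : R :=
  IntRM m (cut_gauss m be mu r s ball dir).

Definition cut_gauss_slice (m : nat) (be mu r s : R) (ball dir : bool) (x : R) : R :=
  gauss be mu x * cut_gauss_mass m be mu (r - (x - mu) ^ 2) (s - x) ball dir.

Lemma sumM_S m g : sumM (S m) g = g 0%nat + sumM m (fun i => g (S i)).
Proof.
  induction m as [|m IH]; [simpl; ring|].
  change (sumM (S (S m)) g) with (sumM (S m) g + g (S m)). rewrite IH. simpl. ring.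
Qed.

Lemma dist2_ge_0 m mu v : 0 <= dist2 m mu v.
Proof.
  unfold dist2. induction m as [|m IH]; [simpl; lra|].
  change (0 <= sumM m (fun i => (v i - mu) ^ 2) + (v m - mu) ^ 2). pose proof (pow2_ge_0 (v m - mu)). lra.
Qed.

Lemma cut_gauss_vcons m be mu r s ball dir x v :
  cut_gauss (S m) be mu r s ball dir (vcons x v) =
  gauss be mu x * cut_gauss m be mu (r - (x - mu) ^ 2) (s - x) ball dir v.
Proof.
  unfold cut_gauss, dist2, gauss, ind_lt, ind_le. rewrite !sumM_S. simpl vcons.
  change (fun i : nat => v i) with v.
  replace (- (be / 2) * ((x - mu) ^ 2 + sumM m (fun i => (v i - mu) ^ 2)))
    with (- (be / 2) * (x - mu) ^ 2 + - (be / 2) * sumM m (fun i => (v i - mu) ^ 2)) by ring.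
  rewrite exp_plus.
  destruct ball, dir; repeat match goal with |- context [Rlt_dec ?a ?b] => destruct (Rlt_dec a b)
    | |- context [Rle_dec ?a ?b] => destruct (Rle_dec a b) end; try ring; lra.
Qed.

Lemma cut_gauss_mass_0 be mu r s ball dir : cut_gauss_mass 0 be mu r s ball dir =
  (if ball then ind_lt 0 r else 1) * (if dir then ind_lt 0 s else ind_le s 0).
Proof. unfold cut_gauss_mass, cut_gauss, dist2. simpl. rewrite Rmult_0_r, exp_0, Rmult_1_l. reflexivity. Qed.

Lemma ind_lt_ball r x mu : ind_lt 0 (r - (x - mu) ^ 2) = ind_lt (mu - sqrt r) x * ind_lt x (mu + sqrt r).
Proof.
  unfold ind_lt. pose proof (sqrt_pos r). destruct (Rle_dec r 0) as [Hr|Hr].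
  - rewrite sqrt_neg_0 by exact Hr. pose proof (pow2_ge_0 (x - mu)).
    destruct (Rlt_dec 0 (r - (x - mu) ^ 2)); destruct (Rlt_dec (mu - 0) x); destruct (Rlt_dec x (mu + 0)); lra.
  - replace (r - (x - mu) ^ 2) with (sqrt r ^ 2 - (x - mu) ^ 2) by (rewrite <- Rsqr_pow2, Rsqr_sqrt; lra).
    assert (Sq : (x - mu) ^ 2 < sqrt r ^ 2 <-> - sqrt r < x - mu < sqrt r) by (split; intro; [split|]; nra).
    destruct (Rlt_dec 0 (sqrt r ^ 2 - (x - mu) ^ 2)); destruct (Rlt_dec (mu - sqrt r) x);
      destruct (Rlt_dec x (mu + sqrt r)); try ring; exfalso.
    all: first [ assert (- sqrt r < x - mu < sqrt r) by (apply Sq; lra); lra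
               | assert ((x - mu) ^ 2 < sqrt r ^ 2) by (apply Sq; lra); lra ].
Qed.

Lemma continuity_pt_squeeze (f k : R -> R) x0 : (forall x, Rabs (f x - f x0) <= k x) ->
  continuity_pt k x0 -> k x0 = 0 -> continuity_pt f x0.
Proof.
  intros Hb Hk Hk0 eps Heps. destruct (Hk eps Heps) as [alp [Ha H]]. exists alp. split; auto.
  intros x Hx. specialize (H x Hx). simpl in *. unfold R_dist in *. rewrite Hk0, Rminus_0_r in H.
  pose proof (Rle_abs (k x)). specialize (Hb x). lra.
Qed.

Lemma continuous_slice be mu (h : R -> R -> R) K r s (x0 : R) :
  (forall r1 r2 s1 s2, Rabs (h r2 s2 - h r1 s1) <= K * (Rabs (s2 - s1) + 2 * sqrt (Rabs (r2 - r1)))) ->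
  continuous (fun x => gauss be mu x * h (r - (x - mu) ^ 2) (s - x)) x0.
Proof.
  intro Hm.
  apply (continuous_mult (K := R_AbsRing) (gauss be mu)); [apply gauss_continuous|].
  apply continuity_pt_filterlim.
  apply continuity_pt_squeeze with (k := fun x => K * (Rabs (x0 - x) + 2 * sqrt (Rabs ((x0 - mu) ^ 2 - (x - mu) ^ 2)))).
  - intro x. eapply Rle_trans; [apply Hm|]. right.
    replace (s - x - (s - x0)) with (x0 - x) by ring.
    replace (r - (x - mu) ^ 2 - (r - (x0 - mu) ^ 2)) with ((x0 - mu) ^ 2 - (x - mu) ^ 2) by ring.
    reflexivity.
  - reg; apply Rabs_pos.
  - cbv beta. rewrite !Rminus_diag, Rabs_R0, sqrt_0. ring.
Qed.

Lemma ex_RInt_gauss_mult be mu c lo hi : ex_RInt (fun x => gauss be mu x * c) lo hi.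
Proof.
  apply (@ex_RInt_continuous R_CompleteNormedModule). intros x _.
  apply (continuous_mult (K := R_AbsRing) (gauss be mu) (fun _ => c)); [apply gauss_continuous | apply continuous_const].
Qed.

Lemma ex_RInt_gauss_ball be mu r c lo hi :
  ex_RInt (fun x => gauss be mu x * ind_lt 0 (r - (x - mu) ^ 2) * c) lo hi.
Proof.
  revert lo hi.
  apply (ex_RInt_piecewise _ (fun _ => 0) (fun x => gauss be mu x * ind_lt x (mu + sqrt r) * c) (mu - sqrt r)).
  - intros x Hx. rewrite ind_lt_ball. unfold ind_lt at 1. destruct (Rlt_dec (mu - sqrt r) x); [lra | ring].
  - intros x Hx. rewrite ind_lt_ball. unfold ind_lt at 1. destruct (Rlt_dec (mu - sqrt r) x); [ring | lra].
  - intros; apply ex_RInt_const.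
  - apply (ex_RInt_piecewise _ (fun x => gauss be mu x * c) (fun _ => 0) (mu + sqrt r)).
    + intros x Hx. unfold ind_lt. destruct (Rlt_dec x (mu + sqrt r)); [ring | lra].
    + intros x Hx. unfold ind_lt. destruct (Rlt_dec x (mu + sqrt r)); [lra | ring].
    + apply ex_RInt_gauss_mult.
    + intros; apply ex_RInt_const.
Qed.

Lemma ex_RInt_cut_gauss_slice_0 be mu r s ball dir lo hi :
  ex_RInt (cut_gauss_slice 0 be mu r s ball dir) lo hi.
Proof.
  unfold cut_gauss_slice. revert lo hi.
  set (B := fun x => if ball then ind_lt 0 (r - (x - mu) ^ 2) else 1).
  assert (EB : forall c lo hi, ex_RInt (fun x => gauss be mu x * B x * c) lo hi).
  { intros c lo hi. unfold B. destruct ball; [apply ex_RInt_gauss_ball|].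
    eapply ex_RInt_ext; [|apply (ex_RInt_gauss_mult be mu c lo hi)]. intros; simpl; ring. }
  assert (Side : forall x, ind_lt 0 (s - x) = ind_lt x s /\ ind_le (s - x) 0 = ind_le s x).
  { intro x. unfold ind_lt, ind_le.
    destruct (Rlt_dec 0 (s - x)), (Rlt_dec x s), (Rle_dec (s - x) 0), (Rle_dec s x); split; lra. }
  apply (ex_RInt_piecewise _ (fun x => gauss be mu x * B x * (if dir then 1 else 0))
                             (fun x => gauss be mu x * B x * (if dir then 0 else 1)) s); try apply EB;
    intros x Hx; rewrite cut_gauss_mass_0; destruct (Side x) as [-> ->]; unfold B, ind_lt, ind_le;
    destruct (Rlt_dec x s), (Rle_dec s x); try lra; destruct ball, dir; ring.
Qed.

Lemma ex_improper_int_dominated be mu f c : 0 < be -> (forall lo hi, ex_RInt f lo hi) ->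
  (forall x, 0 <= f x <= c * gauss be mu x) -> exists l, is_improper_int f l.
Proof.
  intros Hb Hex Hf.
  assert (Hc : 0 <= c) by (destruct (Hf 0); pose proof (gauss_pos be mu 0); nra).
  assert (Eg : forall lo hi, ex_RInt (gauss be mu) lo hi).
  { intros. apply (@ex_RInt_continuous R_CompleteNormedModule). intros; apply gauss_continuous. }
  apply (ex_improper_int_of_bounded f (c * gauss_mass be)); auto; [intro x; apply Hf|].
  intros lo hi Hlh. apply Rle_trans with (RInt (fun x => c * gauss be mu x) lo hi).
  - apply RInt_le; auto; [exact (ex_RInt_scal _ lo hi c (Eg lo hi)) | intros; apply Hf].
  - rewrite (RInt_scal _ lo hi c (Eg lo hi) : RInt (fun x => c * gauss be mu x) lo hi = c * RInt (gauss be mu) lo hi).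
    apply Rmult_le_compat_l; auto.
    apply RInt_le_is_improper_int; auto; [intro; left; apply gauss_pos | apply is_improper_int_gauss, Hb].
Qed.

Definition ind_Icc (p q x : R) : R := ind_le p x * ind_le x q.
Definition ind_Ioo (p q x : R) : R := ind_lt p x * ind_lt x q.

Lemma is_improper_int_ind_Icc p q : p <= q -> is_improper_int (ind_Icc p q) (q - p).
Proof.
  intro H. apply is_improper_int_indicator; auto; intros x Hx; unfold ind_Icc, ind_le;
    destruct (Rle_dec p x), (Rle_dec x q); lra.
Qed.

Lemma is_improper_int_ind_Ioo p q : p <= q -> is_improper_int (ind_Ioo p q) (q - p).
Proof.
  intro H. apply is_improper_int_indicator; auto; intros x Hx; unfold ind_Ioo, ind_lt;
    destruct (Rlt_dec p x), (Rlt_dec x q); lra.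
Qed.

Lemma sqrt_diff_le a b : a <= b -> sqrt b - sqrt a <= sqrt (b - a).
Proof.
  intro H. destruct (Rle_dec a 0) as [Ha|Ha].
  - rewrite (sqrt_neg_0 a Ha). pose proof (sqrt_le_1_alt b (b - a)). lra.
  - pose proof (sqrt_pos a). pose proof (sqrt_pos (b - a)).
    assert (sqrt b <= sqrt a + sqrt (b - a)); [|lra].
    apply Rsqr_incr_0_var; [|lra]. rewrite Rsqr_sqrt by lra. unfold Rsqr.
    pose proof (sqrt_sqrt a ltac:(lra)). pose proof (sqrt_sqrt (b - a) ltac:(lra)). nra.
Qed.

Section CutGaussRegularity.

Variables (be mu : R) (ball dir : bool).
Hypothesis be_pos : 0 < be.

Lemma iter_integrable_cut_gauss_S m :
  (forall r s, iter_integrable m (cut_gauss m be mu r s ball dir)) ->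
  (forall r s, exists l, is_improper_int (cut_gauss_slice m be mu r s ball dir) l) ->
  forall r s, iter_integrable (S m) (cut_gauss (S m) be mu r s ball dir) /\
    is_improper_int (cut_gauss_slice m be mu r s ball dir) (cut_gauss_mass (S m) be mu r s ball dir).
Proof.
  intros HG HI r s.
  assert (E : forall x, IntRM m (fun v => cut_gauss (S m) be mu r s ball dir (vcons x v)) =
                        cut_gauss_slice m be mu r s ball dir x).
  { intro x. rewrite (IntRM_ext m _ _ (cut_gauss_vcons m be mu r s ball dir x)). apply IntRM_scal, HG. }
  assert (HGS : iter_integrable (S m) (cut_gauss (S m) be mu r s ball dir)).
  { split.
    - intro x. eapply iter_integrable_ext; [intro v; symmetry; apply cut_gauss_vcons|].
      apply iter_integrable_scal, HG.
    - destruct (HI r s) as [l Hl]. exists l. eapply is_improper_int_ext; [|exact Hl]. intro x. symmetry. apply E. }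
  split; [exact HGS|]. eapply is_improper_int_ext; [exact E|]. exact (is_improper_int_IntRM_S m _ HGS).
Qed.

Lemma is_improper_int_cut_gauss_slice_0 r s :
  is_improper_int (cut_gauss_slice 0 be mu r s ball dir) (cut_gauss_mass 1 be mu r s ball dir).
Proof.
  apply (iter_integrable_cut_gauss_S 0); [intros; exact I|].
  intros r' s'. apply (ex_improper_int_dominated be mu _ 1 be_pos); [apply ex_RInt_cut_gauss_slice_0|].
  intro x. pose proof (gauss_pos be mu x). unfold cut_gauss_slice. rewrite cut_gauss_mass_0. unfold ind_lt, ind_le.
  destruct ball, dir; repeat match goal with |- context [if ?c then _ else _] => destruct c end; split; nra.
Qed.

Lemma cut_gauss_mass_1_lipschitz_s r s1 s2 :
  Rabs (cut_gauss_mass 1 be mu r s2 ball dir - cut_gauss_mass 1 be mu r s1 ball dir) <= Rabs (s2 - s1).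
Proof.
  assert (K : forall a c, a <= c ->
    Rabs (cut_gauss_mass 1 be mu r c ball dir - cut_gauss_mass 1 be mu r a ball dir) <= c - a).
  { intros a c Hac.
    eapply is_improper_int_abs_le; [| apply is_improper_int_minus; apply is_improper_int_cut_gauss_slice_0
                                     | apply (is_improper_int_ind_Icc a c Hac)].
    intro x. unfold cut_gauss_slice. rewrite !cut_gauss_mass_0.
    pose proof (gauss_pos be mu x). pose proof (gauss_le_1 be mu x (Rlt_le _ _ be_pos)).
    unfold ind_Icc, ind_lt, ind_le. apply Rabs_le.
    destruct ball, dir; repeat match goal with |- context [if ?c then _ else _] => destruct c end; split; lra. }
  destruct (Rle_dec s1 s2).
  - rewrite (Rabs_right (s2 - s1)) by lra. apply K; lra.
  - rewrite Rabs_minus_sym, (Rabs_minus_sym s2), (Rabs_right (s1 - s2)) by lra. apply K; lra.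
Qed.

(* [r] enters only through the ball, of radius [sqrt r]; hence the square-root modulus. *)
Lemma cut_gauss_mass_1_holder_r r1 r2 s :
  Rabs (cut_gauss_mass 1 be mu r2 s ball dir - cut_gauss_mass 1 be mu r1 s ball dir) <= 2 * sqrt (Rabs (r2 - r1)).
Proof.
  assert (K : forall a c, a <= c ->
    Rabs (cut_gauss_mass 1 be mu c s ball dir - cut_gauss_mass 1 be mu a s ball dir) <= 2 * sqrt (c - a)).
  { intros a c Hac.
    pose proof (is_improper_int_minus _ _ _ _ (is_improper_int_cut_gauss_slice_0 c s)
                                              (is_improper_int_cut_gauss_slice_0 a s)) as Hdiff.
    destruct ball.
    2:{ change (cut_gauss_mass 1 be mu c s false dir) with (cut_gauss_mass 1 be mu a s false dir).
        rewrite Rminus_diag, Rabs_R0. pose proof (sqrt_pos (c - a)). lra. }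
    pose proof (sqrt_pos a). pose proof (sqrt_le_1_alt a c Hac). pose proof (sqrt_diff_le a c Hac).
    apply Rle_trans with ((mu + sqrt c - (mu - sqrt c)) - (mu + sqrt a - (mu - sqrt a))); [|lra].
    eapply is_improper_int_abs_le; [| exact Hdiff
      | apply is_improper_int_minus; [apply is_improper_int_ind_Icc | apply is_improper_int_ind_Ioo]; lra].
    intro x. unfold cut_gauss_slice. rewrite !cut_gauss_mass_0, !ind_lt_ball.
    pose proof (gauss_pos be mu x). pose proof (gauss_le_1 be mu x (Rlt_le _ _ be_pos)).
    unfold ind_Icc, ind_Ioo, ind_lt, ind_le. apply Rabs_le.
    destruct dir; repeat match goal with |- context [if ?c then _ else _] => destruct c end; split; lra. }
  destruct (Rle_dec r1 r2).
  - rewrite (Rabs_right (r2 - r1)) by lra. apply K; lra.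
  - rewrite Rabs_minus_sym, (Rabs_minus_sym r2), (Rabs_right (r1 - r2)) by lra. apply K; lra.
Qed.

Lemma cut_gauss_mass_1_modulus r1 r2 s1 s2 :
  Rabs (cut_gauss_mass 1 be mu r2 s2 ball dir - cut_gauss_mass 1 be mu r1 s1 ball dir) <=
  Rabs (s2 - s1) + 2 * sqrt (Rabs (r2 - r1)).
Proof.
  replace (cut_gauss_mass 1 be mu r2 s2 ball dir - cut_gauss_mass 1 be mu r1 s1 ball dir) with
    ((cut_gauss_mass 1 be mu r2 s2 ball dir - cut_gauss_mass 1 be mu r2 s1 ball dir) +
     (cut_gauss_mass 1 be mu r2 s1 ball dir - cut_gauss_mass 1 be mu r1 s1 ball dir)) by ring.
  eapply Rle_trans; [apply Rabs_triang|].
  apply Rplus_le_compat; [apply cut_gauss_mass_1_lipschitz_s | apply cut_gauss_mass_1_holder_r].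
Qed.

(* The modulus of continuity is carried through the induction: it makes the next slice continuous,
   hence Riemann integrable on bounded intervals. *)
Definition cut_gauss_regular (m : nat) : Prop :=
  (forall r s, iter_integrable m (cut_gauss m be mu r s ball dir)) /\
  (forall r s, 0 <= cut_gauss_mass m be mu r s ball dir <= gauss_mass be ^ m) /\
  (forall r s, is_improper_int (cut_gauss_slice m be mu r s ball dir) (cut_gauss_mass (S m) be mu r s ball dir)) /\
  (forall r1 r2 s1 s2,
     Rabs (cut_gauss_mass (S m) be mu r2 s2 ball dir - cut_gauss_mass (S m) be mu r1 s1 ball dir) <=
     gauss_mass be ^ m * (Rabs (s2 - s1) + 2 * sqrt (Rabs (r2 - r1)))).

Lemma cut_gauss_regular_0 : cut_gauss_regular 0.
Proof.
  split; [intros; exact I|]. split; [|split].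
  - intros r s. rewrite cut_gauss_mass_0. unfold ind_lt, ind_le. simpl.
    destruct ball, dir; repeat match goal with |- context [if ?c then _ else _] => destruct c end; split; lra.
  - apply is_improper_int_cut_gauss_slice_0.
  - intros. rewrite pow_O, Rmult_1_l. apply cut_gauss_mass_1_modulus.
Qed.

Lemma cut_gauss_regular_S m : cut_gauss_regular m -> cut_gauss_regular (S m).
Proof.
  intros [IG [IB [IS IM]]]. pose proof (gauss_mass_ge_0 be be_pos) as HK.
  assert (GS : forall r s, iter_integrable (S m) (cut_gauss (S m) be mu r s ball dir)).
  { intros r s. apply (iter_integrable_cut_gauss_S m IG). intros; eexists; apply IS. }
  assert (BS : forall r s, 0 <= cut_gauss_mass (S m) be mu r s ball dir <= gauss_mass be ^ S m).
  { intros r s. split.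
    - eapply is_improper_int_ge_0; [|apply IS].
      intro x. apply Rmult_le_pos; [left; apply gauss_pos | apply IB].
    - replace (gauss_mass be ^ S m) with (gauss_mass be ^ m * gauss_mass be) by (simpl; ring).
      apply (is_improper_int_le (cut_gauss_slice m be mu r s ball dir) (fun x => gauss_mass be ^ m * gauss be mu x));
        [| apply IS | apply is_improper_int_scal, is_improper_int_gauss, be_pos].
      intro x. unfold cut_gauss_slice. pose proof (gauss_pos be mu x).
      pose proof (IB (r - (x - mu) ^ 2) (s - x)). nra. }
  assert (ISS : forall r s, is_improper_int (cut_gauss_slice (S m) be mu r s ball dir)
                                           (cut_gauss_mass (S (S m)) be mu r s ball dir)).
  { apply (iter_integrable_cut_gauss_S (S m) GS). intros r s.
    apply (ex_improper_int_dominated be mu _ (gauss_mass be ^ S m) be_pos).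
    - intros lo hi. apply (@ex_RInt_continuous R_CompleteNormedModule). intros x0 _.
      apply (continuous_slice be mu (fun r s => cut_gauss_mass (S m) be mu r s ball dir) (gauss_mass be ^ m)), IM.
    - intro x. unfold cut_gauss_slice. pose proof (gauss_pos be mu x).
      pose proof (BS (r - (x - mu) ^ 2) (s - x)). split; nra. }
  split; [exact GS|]. split; [exact BS|]. split; [exact ISS|].
  intros r1 r2 s1 s2.
  replace (gauss_mass be ^ S m * (Rabs (s2 - s1) + 2 * sqrt (Rabs (r2 - r1)))) with
    (gauss_mass be ^ m * (Rabs (s2 - s1) + 2 * sqrt (Rabs (r2 - r1))) * gauss_mass be) by (simpl; ring).
  eapply is_improper_int_abs_le;
    [| apply is_improper_int_minus; apply ISS | apply is_improper_int_scal, is_improper_int_gauss, be_pos].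
  intro x. unfold cut_gauss_slice. pose proof (gauss_pos be mu x).
  pose proof (IM (r1 - (x - mu) ^ 2) (r2 - (x - mu) ^ 2) (s1 - x) (s2 - x)) as Hmod.
  replace (r2 - (x - mu) ^ 2 - (r1 - (x - mu) ^ 2)) with (r2 - r1) in Hmod by ring.
  replace (s2 - x - (s1 - x)) with (s2 - s1) in Hmod by ring.
  match goal with |- Rabs (?g * ?a + -1 * (?g * ?b)) <= _ =>
    replace (g * a + -1 * (g * b)) with (g * (a - b)) by ring end.
  rewrite Rabs_mult, (Rabs_right (gauss be mu x)), Rmult_comm by lra.
  apply Rmult_le_compat_r; lra.
Qed.

Lemma cut_gauss_regular_all m : cut_gauss_regular m.
Proof. induction m; [apply cut_gauss_regular_0 | apply cut_gauss_regular_S; assumption]. Qed.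

Lemma iter_integrable_cut_gauss m r s : iter_integrable m (cut_gauss m be mu r s ball dir).
Proof. apply (cut_gauss_regular_all m). Qed.

Lemma is_improper_int_cut_gauss_slice m r s :
  is_improper_int (cut_gauss_slice m be mu r s ball dir) (cut_gauss_mass (S m) be mu r s ball dir).
Proof. apply (cut_gauss_regular_all m). Qed.

End CutGaussRegularity.

(** * Scaling and reflection *)

Definition gauss_lower (m : nat) (t : R) : R := cut_gauss_mass m 1 0 0 t false true.

Lemma is_improper_int_gauss_lower m t :
  is_improper_int (fun y => gauss 1 0 y * gauss_lower m (t - y)) (gauss_lower (S m) t).
Proof. exact (is_improper_int_cut_gauss_slice 1 0 false true Rlt_0_1 m 0 t). Qed.

Lemma gauss_lower_le m : forall t t', t <= t' -> gauss_lower m t <= gauss_lower m t'.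
Proof.
  induction m as [|m IH]; intros t t' H.
  - unfold gauss_lower. rewrite !cut_gauss_mass_0. unfold ind_lt. destruct (Rlt_dec 0 t), (Rlt_dec 0 t'); lra.
  - apply (is_improper_int_le _ _ _ _
      (fun x => Rmult_le_compat_l _ _ _ (Rlt_le _ _ (gauss_pos 1 0 x)) (IH (t - x) (t' - x) ltac:(lra)))
      (is_improper_int_gauss_lower m t) (is_improper_int_gauss_lower m t')).
Qed.

Lemma gauss_std_ge t y : Rabs (y - t) <= 1 -> exp (- (1 / 2) * (Rabs t + 1) ^ 2) <= gauss 1 0 y.
Proof.
  intro H. unfold gauss. apply exp_le_compat.
  apply Rabs_le_between in H. pose proof (Rle_abs t). pose proof (Rle_abs (- t)). rewrite Rabs_Ropp in *.
  assert ((y - 0) ^ 2 <= (Rabs t + 1) ^ 2) by nra. lra.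
Qed.

Lemma gauss_lower_pos m : (1 <= m)%nat -> forall t, 0 < gauss_lower m t.
Proof.
  intro Hm. induction m as [|m IH]; [lia|]. intro t.
  set (e := exp (- (1 / 2) * (Rabs t + 1) ^ 2)). assert (He : 0 < e) by apply exp_pos.
  destruct m as [|m].
  - apply Rlt_le_trans with e; [exact He|].
    apply (is_improper_int_lb _ _ (t - 1) _ (is_improper_int_gauss_lower 0 t)).
    + intro x. unfold gauss_lower. rewrite cut_gauss_mass_0. pose proof (gauss_pos 1 0 x). unfold ind_lt.
      destruct Rlt_dec; nra.
    + intros x Hx. unfold gauss_lower. rewrite cut_gauss_mass_0. unfold ind_lt.
      destruct (Rlt_dec 0 (t - x)); [|lra]. rewrite !Rmult_1_l, Rmult_1_r. apply gauss_std_ge, Rabs_le; lra.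
  - assert (HU : 0 < gauss_lower (S m) (-1)) by (apply IH; lia).
    apply Rlt_le_trans with (e * gauss_lower (S m) (-1)); [nra|].
    apply (is_improper_int_lb _ _ t _ (is_improper_int_gauss_lower (S m) t)).
    + intro x. pose proof (gauss_pos 1 0 x). pose proof (IH ltac:(lia) (t - x)). nra.
    + intros x Hx. apply Rmult_le_compat; try lra; [apply gauss_std_ge, Rabs_le; lra | apply gauss_lower_le; lra].
Qed.

(* Affine change of variables [v = mu 1 + w / sqrt be] in every coordinate. *)
Lemma cut_gauss_mass_scale be mu m r s : 0 < be ->
  cut_gauss_mass m be mu r s false true = (/ sqrt be) ^ m * gauss_lower m (sqrt be * (s - INR m * mu)).
Proof.
  intro Hb. pose proof (sqrt_lt_R0 be Hb) as Hs. revert r s.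
  induction m as [|m IH]; intros r s.
  - unfold gauss_lower. rewrite !cut_gauss_mass_0. simpl. unfold ind_lt.
    destruct (Rlt_dec 0 s), (Rlt_dec 0 (sqrt be * (s - 0 * mu))); try ring; exfalso; nra.
  - set (t := sqrt be * (s - INR (S m) * mu)).
    pose proof (is_improper_int_scal ((/ sqrt be) ^ m) _ _
      (is_improper_int_comp_lin _ _ (sqrt be) (- (sqrt be * mu)) Hs (is_improper_int_gauss_lower m t))) as H.
    apply (is_improper_int_unique (cut_gauss_slice m be mu r s false true));
      [apply is_improper_int_cut_gauss_slice, Hb|].
    replace ((/ sqrt be) ^ S m * gauss_lower (S m) t) with ((/ sqrt be) ^ m * (gauss_lower (S m) t / sqrt be))
      by (simpl; field; lra).
    eapply is_improper_int_ext; [|exact H].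
    intro x. unfold cut_gauss_slice. rewrite IH, <- gauss_scale by exact Hb. unfold t. rewrite S_INR.
    replace (sqrt be * (s - (INR m + 1) * mu) - (sqrt be * x + - (sqrt be * mu))) with (sqrt be * (s - x - INR m * mu))
      by ring.
    ring.
Qed.

(* Reflection [v -> - v] exchanges the two half-spaces; for [m >= 1] the boundary is negligible. *)
Lemma cut_gauss_mass_reflect be mu m r s : 0 < be -> (1 <= m)%nat ->
  cut_gauss_mass m be mu r s false false = cut_gauss_mass m be (- mu) r (- s) false true.
Proof.
  intros Hb Hm. revert r s. induction m as [|m IH]; [lia|]. intros r s.
  apply (is_improper_int_unique (cut_gauss_slice m be mu r s false false));
    [apply is_improper_int_cut_gauss_slice, Hb|].
  pose proof (is_improper_int_comp_opp _ _ (is_improper_int_cut_gauss_slice be (- mu) false true Hb m r (- s))) as H.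
  unfold cut_gauss_slice in *. destruct m as [|m].
  - refine (is_improper_int_ext_but_point _ _ _ s _ H). intros x Hx. rewrite !cut_gauss_mass_0, gauss_opp.
    unfold ind_lt, ind_le. destruct (Rlt_dec 0 (- s - - x)), (Rle_dec (s - x) 0); try ring; lra.
  - eapply is_improper_int_ext; [|exact H]. intro x. cbv beta. rewrite gauss_opp, IH by lia.
    replace (- s - - x) with (- (s - x)) by ring. reflexivity.
Qed.

Definition halfspace_mass (M : nat) (b be : R) : R := cut_gauss_mass M be (- b) 0 0 false true.

Lemma halfspace_mass_pos M b be : (1 <= M)%nat -> 0 < be -> 0 < halfspace_mass M b be.
Proof.
  intros HM Hb. unfold halfspace_mass. rewrite cut_gauss_mass_scale by exact Hb.
  apply Rmult_lt_0_compat; [apply pow_lt, Rinv_0_lt_compat, sqrt_lt_R0, Hb | apply gauss_lower_pos, HM].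
Qed.

Lemma cut_gauss_mass_upper_halfspace M b be : (1 <= M)%nat -> 0 < be ->
  cut_gauss_mass M be b 0 0 false false = halfspace_mass M b be.
Proof. intros HM Hb. rewrite cut_gauss_mass_reflect, Ropp_0 by assumption. reflexivity. Qed.

Lemma halfspace_mass_scale_le M b be1 be2 : 0 < b -> 0 < be1 -> be1 <= be2 ->
  (sqrt be1 / sqrt be2) ^ M * halfspace_mass M b be1 <= halfspace_mass M b be2.
Proof.
  intros Hb H1 H12. unfold halfspace_mass. rewrite !cut_gauss_mass_scale by lra.
  pose proof (sqrt_lt_R0 be1 H1). assert (0 < sqrt be2) by (apply sqrt_lt_R0; lra).
  rewrite <- Rmult_assoc, <- Rpow_mult_distr.
  replace (sqrt be1 / sqrt be2 * / sqrt be1) with (/ sqrt be2) by (field; lra).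
  apply Rmult_le_compat_l; [apply pow_le; left; apply Rinv_0_lt_compat; lra|].
  apply gauss_lower_le. replace (0 - INR M * - b) with (INR M * b) by ring.
  assert (0 <= INR M * b) by (apply Rmult_le_pos; [apply pos_INR | lra]).
  apply Rmult_le_compat_r; [lra | apply sqrt_le_1_alt; lra].
Qed.

Lemma ln_sqrt x : 0 < x -> ln (sqrt x) = ln x / 2.
Proof.
  intro Hx. assert (ln (sqrt x * sqrt x) = ln x) by (rewrite sqrt_sqrt; lra).
  rewrite ln_mult in H by (apply sqrt_lt_R0; lra). lra.
Qed.

Lemma halfspace_mass_ratio_ge M b be1 be2 : (1 <= M)%nat -> 0 < b -> 0 < be1 < be2 ->
  be2 <= be1 * exp (ln (INR M) / INR M) -> / sqrt (INR M) <= halfspace_mass M b be2 / halfspace_mass M b be1.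
Proof.
  intros HM Hb H12 Hr.
  assert (HMp : 0 < INR M) by (apply lt_0_INR; lia).
  pose proof (halfspace_mass_pos M b be1 HM ltac:(lra)). pose proof (halfspace_mass_pos M b be2 HM ltac:(lra)).
  pose proof (sqrt_lt_R0 be1 ltac:(lra)). pose proof (sqrt_lt_R0 be2 ltac:(lra)).
  assert (Hfac : / sqrt (INR M) <= (sqrt be1 / sqrt be2) ^ M).
  { rewrite <- (exp_ln (/ sqrt (INR M))), <- (exp_ln ((sqrt be1 / sqrt be2) ^ M))
      by (try apply pow_lt; try apply Rdiv_lt_0_compat; try apply Rinv_0_lt_compat; try apply sqrt_lt_R0; lra).
    apply exp_le_compat. rewrite ln_pow by (apply Rdiv_lt_0_compat; lra).
    unfold Rdiv. rewrite ln_mult, !ln_Rinv, !ln_sqrt by (try apply Rinv_0_lt_compat; try apply sqrt_lt_R0; lra).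
    assert (Hl : ln be2 <= ln be1 + ln (INR M) / INR M).
    { rewrite <- (ln_exp (ln (INR M) / INR M)), <- ln_mult by (try apply exp_pos; lra). apply ln_le; lra. }
    apply Rmult_le_compat_l with (r := INR M / 2) in Hl; [|lra].
    replace (INR M / 2 * (ln be1 + ln (INR M) / INR M)) with (INR M / 2 * ln be1 + ln (INR M) / 2) in Hl
      by (field; lra).
    lra. }
  apply Rmult_le_reg_r with (halfspace_mass M b be1); [lra|].
  unfold Rdiv. rewrite Rmult_assoc, Rinv_l, Rmult_1_r by lra.
  eapply Rle_trans; [|apply (halfspace_mass_scale_le M b be1 be2); lra]. apply Rmult_le_compat_r; lra.
Qed.

(** * The tempered target *)

Definition normal_const (M : nat) : R := / Rpower (2 * PI) (INR M / 2).
Definition logit (a : R) : R := ln a - ln (1 - a).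
Definition sigmoid (x : R) : R := / (1 + exp (- x)).

Lemma normal_const_pos M : 0 < normal_const M.
Proof. apply Rinv_0_lt_compat, exp_pos. Qed.

Lemma sigmoid_pos x : 0 < sigmoid x.
Proof. apply Rinv_0_lt_compat. pose proof (exp_pos (- x)). lra. Qed.

Lemma sigmoid_le_1 x : sigmoid x <= 1.
Proof. rewrite <- Rinv_1. apply Rinv_le_contravar; [lra|]. pose proof (exp_pos (- x)). lra. Qed.

Lemma sigmoid_le x y : x <= y -> sigmoid x <= sigmoid y.
Proof.
  intro H. apply Rinv_le_contravar; [pose proof (exp_pos (- y)); lra|].
  pose proof (exp_le_compat (- y) (- x) ltac:(lra)). lra.
Qed.

Lemma sigmoid_ge_half x : 0 <= x -> 1 / 2 <= sigmoid x.
Proof.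
  intro H. replace (1 / 2) with (sigmoid 0) by (unfold sigmoid; rewrite Ropp_0, exp_0; field).
  apply sigmoid_le, H.
Qed.

Lemma sigmoid_ratio_ge x y : x <= y -> exp (x - y) <= sigmoid x / sigmoid y.
Proof.
  intro H. unfold sigmoid. pose proof (exp_pos (- x)). pose proof (exp_pos (- y)).
  replace (/ (1 + exp (- x)) / / (1 + exp (- y))) with ((1 + exp (- y)) / (1 + exp (- x))) by (field; lra).
  replace (exp (x - y)) with (exp (- y) / exp (- x))
    by (unfold Rminus; rewrite exp_plus, !exp_Ropp; pose proof (exp_pos x); pose proof (exp_pos y); field; lra).
  pose proof (exp_le_compat (- y) (- x) ltac:(lra)).
  apply Rmult_le_reg_r with (exp (- x) * (1 + exp (- x))); [nra|].
  replace (exp (- y) / exp (- x) * (exp (- x) * (1 + exp (- x)))) with (exp (- y) * (1 + exp (- x))) by (field; lra).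
  replace ((1 + exp (- y)) / (1 + exp (- x)) * (exp (- x) * (1 + exp (- x)))) with (exp (- x) * (1 + exp (- y)))
    by (field; lra).
  nra.
Qed.

Lemma div_sum_sigmoid p q : 0 < p -> 0 < q -> p / (p + q) = sigmoid (ln p - ln q).
Proof.
  intros Hp Hq. unfold sigmoid. rewrite Ropp_minus_distr. unfold Rminus. rewrite exp_plus, exp_Ropp, !exp_ln by lra.
  field. split; lra.
Qed.

Lemma IntRM_mixture M b be c1 c2 : (1 <= M)%nat -> 0 < be ->
  IntRM M (fun z => c1 * cut_gauss M be (- b) 0 0 false true z + c2 * cut_gauss M be b 0 0 false false z) =
  (c1 + c2) * halfspace_mass M b be.
Proof.
  intros HM Hb.
  pose proof (iter_integrable_cut_gauss be (- b) false true Hb M 0 0) as G1.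
  pose proof (iter_integrable_cut_gauss be b false false Hb M 0 0) as G2.
  rewrite IntRM_plus by (apply iter_integrable_scal; assumption).
  rewrite !IntRM_scal by assumption.
  change (IntRM M (cut_gauss M be b 0 0 false false)) with (cut_gauss_mass M be b 0 0 false false).
  rewrite cut_gauss_mass_upper_halfspace by assumption. unfold halfspace_mass, cut_gauss_mass. ring.
Qed.

Lemma pitilde_un_mixture M b a z : pitilde_un M b a z =
  a * normal_const M * cut_gauss M 1 (- b) 0 0 false true z +
  (1 - a) * normal_const M * cut_gauss M 1 b 0 0 false false z.
Proof. unfold pitilde_un, normal_iso, indA, cut_gauss, dist2, ind_lt, ind_le, normal_const. ring. Qed.

Lemma IntRM_pitilde_un M b a : (1 <= M)%nat ->
  IntRM M (pitilde_un M b a) = normal_const M * halfspace_mass M b 1.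
Proof.
  intro HM. rewrite (IntRM_ext M _ _ (pitilde_un_mixture M b a)), IntRM_mixture by (auto; lra). ring.
Qed.

Section TemperedTarget.

Variables (M : nat) (b a : R).
Hypotheses (M_pos : (1 <= M)%nat) (a_bounds : 0 < a < 1).

Let Z := IntRM M (pitilde_un M b a).

Lemma IntRM_pitilde_un_pos : 0 < Z.
Proof.
  unfold Z. rewrite IntRM_pitilde_un by exact M_pos.
  apply Rmult_lt_0_compat; [apply normal_const_pos | apply halfspace_mass_pos; [exact M_pos | lra]].
Qed.

Lemma Rpower_pitilde be z : Rpower (pitilde M b a z) be =
  Rpower (a * normal_const M / Z) be * cut_gauss M be (- b) 0 0 false true z +
  Rpower ((1 - a) * normal_const M / Z) be * cut_gauss M be b 0 0 false false z.
Proof.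
  pose proof IntRM_pitilde_un_pos. pose proof (normal_const_pos M).
  assert (Key : forall w y, 0 < w -> Rpower (w * exp (- (1 / 2) * y)) be = Rpower w be * exp (- (be / 2) * y)).
  { intros w y Hw. unfold Rpower. rewrite ln_mult, ln_exp, <- exp_plus by (auto; apply exp_pos). f_equal. field. }
  unfold pitilde. rewrite pitilde_un_mixture. fold Z. unfold cut_gauss, ind_lt, ind_le.
  destruct (Rlt_dec (sumM M z) 0), (Rle_dec 0 (sumM M z)); try lra.
  - match goal with |- Rpower ?u be = _ =>
      replace u with (a * normal_const M / Z * exp (- (1 / 2) * dist2 M (- b) z)) by (field; lra) end.
    rewrite Key by (apply Rdiv_lt_0_compat; nra). ring.
  - match goal with |- Rpower ?u be = _ =>
      replace u with ((1 - a) * normal_const M / Z * exp (- (1 / 2) * dist2 M b z)) by (field; lra) end.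
    rewrite Key by (apply Rdiv_lt_0_compat; nra). ring.
Qed.

Lemma pi_temp_mixture be z : 0 < be -> pi_temp M b a be z =
  sigmoid (be * logit a) / halfspace_mass M b be * cut_gauss M be (- b) 0 0 false true z +
  sigmoid (- (be * logit a)) / halfspace_mass M b be * cut_gauss M be b 0 0 false false z.
Proof.
  intro Hbe. pose proof IntRM_pitilde_un_pos. pose proof (normal_const_pos M).
  pose proof (halfspace_mass_pos M b be M_pos Hbe).
  set (p := Rpower (a * normal_const M / Z) be). set (q := Rpower ((1 - a) * normal_const M / Z) be).
  assert (Hp : 0 < p) by apply exp_pos. assert (Hq : 0 < q) by apply exp_pos.
  assert (Hlog : ln p - ln q = be * logit a).
  { assert (0 < / Z) by (apply Rinv_0_lt_compat; lra).
    assert (0 < a * normal_const M) by nra. assert (0 < (1 - a) * normal_const M) by nra.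
    assert (0 < a) by lra. assert (0 < 1 - a) by lra.
    unfold p, q, logit. rewrite !ln_Rpower. unfold Rdiv. rewrite !ln_mult by assumption. ring. }
  unfold pi_temp. rewrite (IntRM_ext M _ _ (Rpower_pitilde be)), IntRM_mixture, Rpower_pitilde by assumption.
  fold p q. rewrite <- Hlog, <- div_sum_sigmoid by assumption.
  replace (- (ln p - ln q)) with (ln q - ln p) by ring. rewrite <- div_sum_sigmoid by assumption.
  field. split; lra.
Qed.

Lemma prob_lower be : 0 < be -> prob M b a be 1 = sigmoid (be * logit a).
Proof.
  intro Hbe. unfold prob. pose proof (halfspace_mass_pos M b be M_pos Hbe).
  rewrite (IntRM_ext M _ (fun z =>
             sigmoid (be * logit a) / halfspace_mass M b be * cut_gauss M be (- b) 0 0 false true z +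
             0 * cut_gauss M be b 0 0 false false z)).
  - rewrite IntRM_mixture by assumption. field. lra.
  - intro z. rewrite pi_temp_mixture by exact Hbe. unfold indA, cut_gauss, ind_lt, ind_le.
    destruct (Rlt_dec (sumM M z) 0), (Rle_dec 0 (sumM M z)); try lra; ring.
Qed.

Lemma prob_upper be : 0 < be -> prob M b a be 2 = sigmoid (- (be * logit a)).
Proof.
  intro Hbe. unfold prob. pose proof (halfspace_mass_pos M b be M_pos Hbe).
  rewrite (IntRM_ext M _ (fun z => 0 * cut_gauss M be (- b) 0 0 false true z +
             sigmoid (- (be * logit a)) / halfspace_mass M b be * cut_gauss M be b 0 0 false false z)).
  - rewrite IntRM_mixture by assumption. field. lra.
  - intro z. rewrite pi_temp_mixture by exact Hbe. unfold indA, cut_gauss, ind_lt, ind_le.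
    destruct (Rlt_dec (sumM M z) 0), (Rle_dec 0 (sumM M z)); try lra; ring.
Qed.

End TemperedTarget.

(** * Minima of Gaussians and the overlap *)

Lemma cut_gauss_le_temp m be1 be2 mu r s ball dir v : be1 <= be2 ->
  cut_gauss m be2 mu r s ball dir v <= cut_gauss m be1 mu r s ball dir v.
Proof.
  intro H. unfold cut_gauss. pose proof (dist2_ge_0 m mu v).
  assert (exp (- (be2 / 2) * dist2 m mu v) <= exp (- (be1 / 2) * dist2 m mu v)) by (apply exp_le_compat; nra).
  unfold ind_lt, ind_le. destruct ball, dir; repeat match goal with |- context [if ?c then _ else _] => destruct c end; lra.
Qed.

Lemma Rmin_exp_profiles be1 be2 k1 k2 u : be1 < be2 -> 0 < k1 -> 0 < k2 ->
  let u0 := 2 * (ln k2 - ln k1) / (be2 - be1) in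
  Rmin (k1 * exp (- (be1 / 2) * u)) (k2 * exp (- (be2 / 2) * u)) =
  if Rlt_dec u u0 then k1 * exp (- (be1 / 2) * u) else k2 * exp (- (be2 / 2) * u).
Proof.
  intros Hb H1 H2 u0.
  rewrite <- (exp_ln k1), <- (exp_ln k2), <- !exp_plus by assumption.
  assert (E : u0 * (be2 - be1) = 2 * (ln k2 - ln k1)) by (unfold u0; field; lra).
  destruct (Rlt_dec u u0) as [H|H].
  - apply Rmin_left, exp_le_compat. apply Rmult_lt_compat_r with (r := be2 - be1) in H; nra.
  - apply Rmin_right, exp_le_compat. apply Rnot_lt_le in H.
    apply Rmult_le_compat_r with (r := be2 - be1) in H; nra.
Qed.

Lemma cut_gauss_ge_0 m be mu r s ball dir v : 0 <= cut_gauss m be mu r s ball dir v.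
Proof.
  unfold cut_gauss, ind_lt, ind_le. pose proof (exp_pos (- (be / 2) * dist2 m mu v)).
  destruct ball, dir; repeat match goal with |- context [if ?c then _ else _] => destruct c end; lra.
Qed.

Lemma ind_lt_0_1 x y : ind_lt x y = 0 \/ ind_lt x y = 1.
Proof. unfold ind_lt. destruct (Rlt_dec x y); auto. Qed.

Lemma ind_le_0_1 x y : ind_le x y = 0 \/ ind_le x y = 1.
Proof. unfold ind_le. destruct (Rle_dec x y); auto. Qed.

Lemma Rmin_mult_indicator x y d : d = 0 \/ d = 1 -> Rmin (x * d) (y * d) = Rmin x y * d.
Proof. intros [-> | ->]; rewrite ?Rmult_0_r, ?Rmult_1_r; [apply Rmin_left; lra | reflexivity]. Qed.

(* Inside the crossing radius of the two profiles the minimum is the [b1]-profile and outside it the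
   [b2]-profile: a signed combination of cut Gaussians with and without the ball. *)
Lemma iter_integrable_min_cut_gauss_lt m mu dir b1 b2 c1 c2 : 0 < b1 < b2 -> 0 < c1 -> 0 < c2 ->
  iter_integrable m (fun z => Rmin (c1 * cut_gauss m b1 mu 0 0 false dir z) (c2 * cut_gauss m b2 mu 0 0 false dir z)).
Proof.
  intros Hb H1 H2. set (u0 := 2 * (ln c2 - ln c1) / (b2 - b1)).
  apply iter_integrable_ext with
    (F := fun z => (c1 * cut_gauss m b1 mu u0 0 true dir z + c2 * cut_gauss m b2 mu 0 0 false dir z)
                   + - c2 * cut_gauss m b2 mu u0 0 true dir z).
  - intro z. pose proof (Rmin_exp_profiles b1 b2 c1 c2 (dist2 m mu z) ltac:(lra) H1 H2) as E.
    cbv zeta in E. fold u0 in E. unfold cut_gauss. cbv beta iota.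
    set (D := if dir then ind_lt (sumM m z) 0 else ind_le 0 (sumM m z)).
    assert (HD : D = 0 \/ D = 1) by (unfold D; destruct dir; [apply ind_lt_0_1 | apply ind_le_0_1]).
    match goal with |- _ = Rmin (c1 * (?e1 * 1 * D)) (c2 * (?e2 * 1 * D)) =>
      replace (Rmin (c1 * (e1 * 1 * D)) (c2 * (e2 * 1 * D))) with (Rmin (c1 * e1) (c2 * e2) * D)
        by (rewrite <- Rmin_mult_indicator by exact HD; f_equal; ring) end.
    rewrite E. unfold ind_lt. destruct (Rlt_dec (dist2 m mu z) u0); ring.
  - repeat apply iter_integrable_plus; apply iter_integrable_scal, iter_integrable_cut_gauss; lra.
Qed.

Section MinOfCutGaussians.

Variables (m : nat) (mu : R) (dir : bool) (be1 be2 k1 k2 : R).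
Hypotheses (be1_pos : 0 < be1) (be2_pos : 0 < be2) (k1_pos : 0 < k1) (k2_pos : 0 < k2).

Definition min_cut_gauss (z : nat -> R) : R :=
  Rmin (k1 * cut_gauss m be1 mu 0 0 false dir z) (k2 * cut_gauss m be2 mu 0 0 false dir z).

Lemma iter_integrable_min_cut_gauss : be1 <> be2 -> iter_integrable m min_cut_gauss.
Proof.
  intro Hne. unfold min_cut_gauss. destruct (Rlt_dec be1 be2).
  - apply iter_integrable_min_cut_gauss_lt; auto.
  - eapply iter_integrable_ext; [intro z; apply Rmin_comm|].
    apply iter_integrable_min_cut_gauss_lt; auto; lra.
Qed.

Lemma IntRM_min_cut_gauss_ge : be1 <> be2 ->
  Rmin k1 k2 * cut_gauss_mass m (Rmax be1 be2) mu 0 0 false dir <= IntRM m min_cut_gauss.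
Proof.
  intro Hne. pose proof (Rmax_l be1 be2). pose proof (Rmax_r be1 be2).
  pose proof (iter_integrable_cut_gauss (Rmax be1 be2) mu false dir ltac:(lra) m 0 0) as G.
  unfold cut_gauss_mass. rewrite <- IntRM_scal by exact G.
  apply IntRM_le; [apply iter_integrable_scal, G | apply iter_integrable_min_cut_gauss, Hne |].
  intro z. unfold min_cut_gauss.
  pose proof (cut_gauss_ge_0 m (Rmax be1 be2) mu 0 0 false dir z).
  pose proof (cut_gauss_le_temp m be1 (Rmax be1 be2) mu 0 0 false dir z ltac:(lra)).
  pose proof (cut_gauss_le_temp m be2 (Rmax be1 be2) mu 0 0 false dir z ltac:(lra)).
  pose proof (Rmin_l k1 k2). pose proof (Rmin_r k1 k2).
  apply Rmin_glb; nra.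
Qed.

End MinOfCutGaussians.

Lemma overlap_ge M b a bk bl j : (1 <= M)%nat -> 0 < a < 1 -> 0 < bk -> 0 < bl -> bk <> bl ->
  (j = 1 \/ j = 2)%nat ->
  / prob M b a bk j * (Rmin (prob M b a bk j / halfspace_mass M b bk) (prob M b a bl j / halfspace_mass M b bl) *
                       halfspace_mass M b (Rmax bk bl)) <= overlap M b a bk bl j.
Proof.
  intros HM Ha Hk Hl Hne Hj.
  assert (Hp : forall be, 0 < be -> 0 < prob M b a be j)
    by (intros; destruct Hj as [-> | ->]; [rewrite prob_lower | rewrite prob_upper]; auto; apply sigmoid_pos).
  assert (Hc : forall be, 0 < be -> 0 < prob M b a be j / halfspace_mass M b be)
    by (intros; apply Rdiv_lt_0_compat; [apply Hp | apply halfspace_mass_pos]; auto).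
  pose proof (Rmax_l bk bl).
  unfold overlap. apply Rmult_le_compat_l; [left; apply Rinv_0_lt_compat, Hp, Hk|].
  assert (Zero : Rmin 0 0 = 0) by (apply Rmin_left; lra).
  destruct Hj as [-> | ->].
  - rewrite (IntRM_ext M _ (min_cut_gauss M (- b) true bk bl
               (prob M b a bk 1 / halfspace_mass M b bk) (prob M b a bl 1 / halfspace_mass M b bl))).
    + apply IntRM_min_cut_gauss_ge; auto.
    + intro z. unfold min_cut_gauss. rewrite !pi_temp_mixture, !prob_lower by auto.
      unfold indA, cut_gauss, ind_lt, ind_le. destruct (Rlt_dec (sumM M z) 0), (Rle_dec 0 (sumM M z)); try lra.
      * rewrite !Rmult_0_r, !Rplus_0_r, Rmult_1_l. reflexivity.
      * rewrite Rmult_0_l, !Rmult_0_r, Zero. reflexivity.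
  - rewrite (IntRM_ext M _ (min_cut_gauss M b false bk bl
               (prob M b a bk 2 / halfspace_mass M b bk) (prob M b a bl 2 / halfspace_mass M b bl))).
    + rewrite <- (cut_gauss_mass_upper_halfspace M b (Rmax bk bl)) by (auto; lra).
      apply IntRM_min_cut_gauss_ge; auto.
    + intro z. unfold min_cut_gauss. rewrite !pi_temp_mixture, !prob_upper by auto.
      unfold indA, cut_gauss, ind_lt, ind_le. destruct (Rlt_dec (sumM M z) 0), (Rle_dec 0 (sumM M z)); try lra.
      * rewrite Rmult_0_l, !Rmult_0_r, Zero. reflexivity.
      * rewrite !Rmult_0_r, !Rplus_0_l, Rmult_1_l. reflexivity.
Qed.

(** * The temperature ladder *)

Lemma exists_bracket (x : nat -> R) y n : x 0%nat <= y -> y < x n ->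
  exists j, (j < n)%nat /\ x j <= y < x (S j).
Proof.
  induction n as [|n IH]; intros H0 Hn; [lra|].
  destruct (Rlt_or_le y (x n)) as [H|H].
  - destruct (IH H0 H) as [j [Hj Hj']]. exists j. split; [lia | exact Hj'].
  - exists n. split; [lia | split; assumption].
Qed.

Lemma in_beta_set_bounds M x : (1 <= M)%nat -> in_beta_set M x -> / INR M <= x <= 1.
Proof.
  intros HM H. assert (HMp : 1 <= INR M) by (apply (le_INR 1); auto).
  assert (Hl : 0 <= ln (INR M)) by (rewrite <- ln_1; apply ln_le; lra).
  destruct H as [[k [Hk ->]] | [k [[H1 H2] ->]]].
  - apply le_INR in Hk. pose proof (pos_INR k). unfold Rpower.
    assert (- (INR M - INR k) / INR M >= -1) by (apply Rle_ge, Rmult_le_reg_r with (INR M); [lra | field_simplify; lra]).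
    assert (- (INR M - INR k) / INR M <= 0) by (apply Rmult_le_reg_r with (INR M); [lra | field_simplify; lra]).
    split.
    + rewrite <- (exp_ln (INR M)) at 1 by lra. rewrite <- exp_Ropp. apply exp_le_compat. nra.
    + rewrite <- exp_0. apply exp_le_compat. nra.
  - apply le_INR in H1. apply le_INR in H2. simpl in H1. split.
    + unfold Rdiv. rewrite <- (Rmult_1_l (/ INR M)) at 1. apply Rmult_le_compat_r; [left; apply Rinv_0_lt_compat|]; lra.
    + apply Rmult_le_reg_r with (INR M); [lra | field_simplify; lra].
Qed.

Section TemperatureLadder.

Variables (M N : nat) (beta : nat -> R).
Hypotheses (M_pos : (1 <= M)%nat) (beta_incr : forall k, (k < N)%nat -> beta k < beta (S k))
  (beta_set : forall x, (exists k, (k <= N)%nat /\ x = beta k) <-> in_beta_set M x).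

Lemma beta_lt i j : (i < j)%nat -> (j <= N)%nat -> beta i < beta j.
Proof.
  intros Hij HjN. induction j as [|j IH]; [lia|].
  destruct (Nat.eq_dec i j) as [->|Hne]; [apply beta_incr; lia|].
  apply Rlt_trans with (beta j); [apply IH; lia | apply beta_incr; lia].
Qed.

Lemma beta_bounds i : (i <= N)%nat -> / INR M <= beta i <= 1.
Proof. intro Hi. apply in_beta_set_bounds; [exact M_pos|]. apply beta_set. exists i. auto. Qed.

Lemma beta_pos i : (i <= N)%nat -> 0 < beta i.
Proof.
  intro Hi. pose proof (beta_bounds i Hi). assert (0 < / INR M); [|lra].
  apply Rinv_0_lt_compat, lt_0_INR. lia.
Qed.

Lemma no_beta_between k x : (k < N)%nat -> in_beta_set M x -> ~ (beta k < x < beta (S k)).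
Proof.
  intros Hk Hx [A B]. apply beta_set in Hx. destruct Hx as [i [Hi ->]].
  destruct (Nat.lt_ge_cases k i).
  - destruct (Nat.eq_dec i (S k)) as [->|Hne]; [lra|].
    pose proof (beta_lt (S k) i ltac:(lia) Hi). lra.
  - destruct (Nat.eq_dec i k) as [->|Hne]; [lra|].
    pose proof (beta_lt i k ltac:(lia) ltac:(lia)). lra.
Qed.

(* The grid [{j / M}] is contained in the ladder, so consecutive rungs are at most [1 / M] apart. *)
Lemma beta_step_le k : (k < N)%nat -> beta (S k) - beta k <= / INR M.
Proof.
  intro Hk. assert (HMp : 1 <= INR M) by (apply (le_INR 1); auto).
  pose proof (beta_bounds k ltac:(lia)). pose proof (beta_bounds (S k) ltac:(lia)). pose proof (beta_incr k Hk).
  apply Rnot_lt_le. intro Hc.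
  set (x := fun j : nat => INR (S j) / INR M).
  assert (X0 : x 0%nat <= beta k) by (unfold x; simpl; lra).
  assert (Xn : beta k < x (M - 1)%nat).
  { unfold x. replace (S (M - 1)) with M by lia. unfold Rdiv. rewrite Rinv_r; lra. }
  destruct (exists_bracket x (beta k) (M - 1) X0 Xn) as [j [Hj [A B]]].
  apply (no_beta_between k (x (S j)) Hk); [right; exists (S (S j)); split; [lia | reflexivity]|].
  split; [exact B|]. unfold x in *. rewrite (S_INR (S j)).
  replace ((INR (S j) + 1) / INR M) with (INR (S j) / INR M + / INR M) by (field; lra). lra.
Qed.

(* Likewise the geometric grid [{M^(-(M-j)/M)}] bounds the ratio of consecutive rungs by [M^(1/M)]. *)
Lemma beta_ratio_le k : (k < N)%nat -> beta (S k) <= beta k * exp (ln (INR M) / INR M).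
Proof.
  intro Hk. assert (HMp : 1 <= INR M) by (apply (le_INR 1); auto).
  pose proof (beta_bounds k ltac:(lia)) as Bk. pose proof (beta_bounds (S k) ltac:(lia)). pose proof (beta_incr k Hk).
  apply Rnot_lt_le. intro Hc.
  set (x := fun j : nat => Rpower (INR M) (- (INR M - INR j) / INR M)).
  assert (X0 : x 0%nat <= beta k).
  { unfold x, Rpower. simpl INR. replace (- (INR M - 0) / INR M) with (-1) by (field; lra).
    rewrite <- (exp_ln (INR M)), <- exp_Ropp in Bk by lra. replace (-1 * ln (INR M)) with (- ln (INR M)) by ring. lra. }
  assert (Xn : beta k < x M).
  { unfold x. replace (- (INR M - INR M) / INR M) with 0 by (field; lra). rewrite Rpower_O by lra. lra. }
  destruct (exists_bracket x (beta k) M X0 Xn) as [j [Hj [A B]]].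
  apply (no_beta_between k (x (S j)) Hk); [left; exists (S j); split; [lia | reflexivity]|].
  split; [exact B|].
  assert (E : x (S j) = x j * exp (ln (INR M) / INR M)).
  { unfold x, Rpower. rewrite <- exp_plus. f_equal. rewrite S_INR. field. lra. }
  rewrite E. apply Rle_lt_trans with (beta k * exp (ln (INR M) / INR M)); [|exact Hc].
  apply Rmult_le_compat_r; [left; apply exp_pos | exact A].
Qed.

End TemperatureLadder.

Lemma prod1N_ext n h h' : (forall k, (1 <= k <= n)%nat -> h k = h' k) -> prod1N n h = prod1N n h'.
Proof.
  induction n as [|n IH]; intro H; [reflexivity|].
  simpl. rewrite IH by (intros; apply H; lia). rewrite H by lia. reflexivity.
Qed.

Lemma prod1N_const_1 n : prod1N n (fun _ => 1) = 1.
Proof. induction n as [|n IH]; [reflexivity|]. simpl. rewrite IH. ring. Qed.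

Lemma prod1N_telescope n (f : nat -> R) : (forall k, (k <= n)%nat -> 0 < f k) ->
  prod1N n (fun k => f (k - 1)%nat / f k) = f 0%nat / f n.
Proof.
  induction n as [|n IH]; intro H; [pose proof (H 0%nat ltac:(lia)); simpl; field; lra|].
  simpl prod1N. rewrite IH, Nat.sub_0_r by (intros; apply H; lia).
  pose proof (H n ltac:(lia)). pose proof (H (S n) ltac:(lia)). field. split; lra.
Qed.

Lemma sigmoid_adjacent x y c : 0 < c -> x <= y -> y - x <= ln c ->
  / c <= sigmoid x / sigmoid y /\ 1 <= sigmoid y / sigmoid x.
Proof.
  intros Hc Hxy Hyx. pose proof (sigmoid_pos x). pose proof (sigmoid_pos y). split.
  - rewrite <- (exp_ln c), <- exp_Ropp by exact Hc.
    eapply Rle_trans; [apply exp_le_compat | apply sigmoid_ratio_ge]; lra.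
  - apply Rmult_le_reg_r with (sigmoid x); [lra|]. unfold Rdiv.
    rewrite Rmult_assoc, Rinv_l, Rmult_1_r, Rmult_1_l by lra. apply sigmoid_le, Hxy.
Qed.

Lemma Rmin_ratio_lb pk Gk pl Gl G th : 0 < pk -> 0 < Gk -> 0 < Gl ->
  th <= G / Gk -> th <= pl / pk * (G / Gl) -> th <= / pk * (Rmin (pk / Gk) (pl / Gl) * G).
Proof.
  intros Hpk HGk HGl H1 H2. unfold Rmin. destruct (Rle_dec (pk / Gk) (pl / Gl)).
  - replace (/ pk * (pk / Gk * G)) with (G / Gk) by (field; lra). exact H1.
  - replace (/ pk * (pl / Gl * G)) with (pl / pk * (G / Gl)) by (field; lra). exact H2.
Qed.

Section Theorem12.

Variables (b c : R) (M : nat) (a : R) (N : nat) (beta : nat -> R).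
Hypotheses (hb : 0 < b) (hc : 1 <= c) (hM : (1 <= M)%nat) (ha1 : 1 / 2 <= a) (ha2 : a < 1)
  (hac : a / (1 - a) <= c ^ M) (hinc : forall k, (k < N)%nat -> beta k < beta (S k))
  (hset : forall x, (exists k, (k <= N)%nat /\ x = beta k) <-> in_beta_set M x).

Lemma logit_bounds : 0 <= logit a <= INR M * ln c.
Proof.
  unfold logit. split.
  - pose proof (ln_le (1 - a) a ltac:(lra) ltac:(lra)). lra.
  - rewrite <- ln_pow by lra. replace (ln a - ln (1 - a)) with (ln (a / (1 - a))).
    + apply ln_le; [apply Rdiv_lt_0_compat; lra | exact hac].
    + unfold Rdiv. rewrite ln_mult, ln_Rinv by (try apply Rinv_0_lt_compat; lra). ring.
Qed.

Lemma beta_step_logit_le k : (k < N)%nat -> (beta (S k) - beta k) * logit a <= ln c.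
Proof.
  intro Hk. pose proof (beta_step_le M N beta hM hinc hset k Hk). pose proof (hinc k Hk).
  pose proof logit_bounds. assert (HMp : 1 <= INR M) by (apply (le_INR 1); auto).
  apply Rle_trans with (/ INR M * (INR M * ln c)); [apply Rmult_le_compat; lra|].
  right. field. lra.
Qed.

Lemma prob_lower_nondecreasing k : (k < N)%nat -> prob M b a (beta k) 1 <= prob M b a (beta (S k)) 1.
Proof.
  intro Hk. pose proof logit_bounds. pose proof (hinc k Hk).
  rewrite !prob_lower by (auto; try lra; apply (beta_pos M N beta hM hset); lia).
  apply sigmoid_le. nra.
Qed.

Lemma gammaA_ge_half : 1 / 2 <= gammaA M b a N beta.
Proof.
  pose proof logit_bounds as [HL0 _]. set (L := logit a) in *.
  pose proof (beta_pos M N beta hM hset) as Hpos.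
  assert (Hp1 : forall i, (i <= N)%nat -> prob M b a (beta i) 1 = sigmoid (beta i * L))
    by (intros; apply prob_lower; auto; lra).
  assert (Hp2 : forall i, (i <= N)%nat -> prob M b a (beta i) 2 = sigmoid (- (beta i * L)))
    by (intros; apply prob_upper; auto; lra).
  assert (Prev : forall k, (1 <= k <= N)%nat -> beta (k - 1)%nat * L <= beta k * L).
  { intros k Hk. pose proof (hinc (k - 1)%nat ltac:(lia)) as H. replace (S (k - 1)) with k in H by lia. nra. }
  unfold gammaA. cbv zeta.
  rewrite (prod1N_ext N _ (fun k => sigmoid (beta (k - 1)%nat * L) / sigmoid (beta k * L))).
  2:{ intros k Hk. rewrite !Hp1 by lia. apply Rmin_right.
      pose proof (sigmoid_pos (beta k * L)). apply Rmult_le_reg_r with (sigmoid (beta k * L)); [lra|].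
      unfold Rdiv. rewrite Rmult_assoc, Rinv_l, Rmult_1_r, Rmult_1_l by lra. apply sigmoid_le, Prev, Hk. }
  rewrite (prod1N_ext N (fun k => Rmin 1 (prob M b a (beta (k - 1)%nat) 2 / prob M b a (beta k) 2)) (fun _ => 1)).
  2:{ intros k Hk. rewrite !Hp2 by lia. apply Rmin_left.
      pose proof (sigmoid_pos (- (beta k * L))). apply Rmult_le_reg_r with (sigmoid (- (beta k * L))); [lra|].
      unfold Rdiv. rewrite Rmult_assoc, Rinv_l, Rmult_1_r, Rmult_1_l by lra.
      apply sigmoid_le. pose proof (Prev k Hk). lra. }
  rewrite (prod1N_telescope N (fun i => sigmoid (beta i * L))), prod1N_const_1 by (intros; apply sigmoid_pos).
  apply Rmin_glb; [|lra].
  pose proof (sigmoid_ge_half (beta 0%nat * L) ltac:(pose proof (Hpos 0%nat ltac:(lia)); nra)).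
  pose proof (sigmoid_le_1 (beta N * L)). pose proof (sigmoid_pos (beta N * L)).
  apply Rle_trans with (sigmoid (beta 0%nat * L)); [lra|].
  apply Rmult_le_reg_r with (sigmoid (beta N * L)); [lra|].
  unfold Rdiv. rewrite Rmult_assoc, Rinv_l, Rmult_1_r by lra.
  pose proof (sigmoid_pos (beta 0%nat * L)). nra.
Qed.

Lemma prob_adjacent_ratios i j : (i < N)%nat -> (j = 1 \/ j = 2)%nat ->
  / c <= prob M b a (beta (S i)) j / prob M b a (beta i) j /\
  / c <= prob M b a (beta i) j / prob M b a (beta (S i)) j.
Proof.
  intros Hi Hj. pose proof logit_bounds as [HL0 _]. pose proof (beta_step_logit_le i Hi). pose proof (hinc i Hi).
  pose proof (beta_pos M N beta hM hset i ltac:(lia)). pose proof (beta_pos M N beta hM hset (S i) ltac:(lia)).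
  assert (/ c <= 1) by (rewrite <- Rinv_1; apply Rinv_le_contravar; lra).
  destruct Hj as [-> | ->]; [rewrite !prob_lower by (auto; lra) | rewrite !prob_upper by (auto; lra)].
  - destruct (sigmoid_adjacent (beta i * logit a) (beta (S i) * logit a) c) as [D U]; [lra | nra | nra |].
    split; lra.
  - destruct (sigmoid_adjacent (- (beta (S i) * logit a)) (- (beta i * logit a)) c) as [D U]; [lra | nra | nra |].
    split; lra.
Qed.

Lemma overlap_adjacent_ge k l j : (k <= N)%nat -> (l <= N)%nat -> (k = S l \/ l = S k) ->
  (j = 1 \/ j = 2)%nat -> / (c * sqrt (INR M)) <= overlap M b a (beta k) (beta l) j.
Proof.
  intros Hk Hl Hadj Hj.
  assert (HMp : 1 <= INR M) by (apply (le_INR 1); auto).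
  assert (Hsq : 1 <= sqrt (INR M)) by (rewrite <- sqrt_1; apply sqrt_le_1_alt; lra).
  assert (Hth : / (c * sqrt (INR M)) = / c * / sqrt (INR M)) by (apply Rinv_mult).
  assert (Hc1 : / c <= 1) by (rewrite <- Rinv_1; apply Rinv_le_contravar; lra).
  assert (Hsq1 : / sqrt (INR M) <= 1) by (rewrite <- Rinv_1; apply Rinv_le_contravar; lra).
  assert (Hc0 : 0 < / c) by (apply Rinv_0_lt_compat; lra).
  assert (Hsq0 : 0 < / sqrt (INR M)) by (apply Rinv_0_lt_compat; lra).
  pose proof (beta_pos M N beta hM hset k Hk). pose proof (beta_pos M N beta hM hset l Hl).
  assert (Hp : forall i, (i <= N)%nat -> 0 < prob M b a (beta i) j)
    by (intros; destruct Hj as [-> | ->]; [rewrite prob_lower | rewrite prob_upper];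
        auto; try lra; try apply sigmoid_pos; apply (beta_pos M N beta hM hset); assumption).
  assert (HG : forall i, (i <= N)%nat -> 0 < halfspace_mass M b (beta i))
    by (intros; apply halfspace_mass_pos; auto; apply (beta_pos M N beta hM hset); assumption).
  assert (Mass : forall i, (i < N)%nat ->
            / sqrt (INR M) <= halfspace_mass M b (beta (S i)) / halfspace_mass M b (beta i)).
  { intros i Hi. pose proof (hinc i Hi). apply halfspace_mass_ratio_ge; auto.
    - split; [apply (beta_pos M N beta hM hset); lia | assumption].
    - apply (beta_ratio_le M N beta hM hinc hset i Hi). }
  pose proof (Hp k Hk). pose proof (HG k Hk). pose proof (HG l Hl).
  assert (Hne : beta k <> beta l)
    by (destruct Hadj as [-> | ->]; [pose proof (hinc l ltac:(lia)) | pose proof (hinc k ltac:(lia))]; lra).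
  eapply Rle_trans; [|apply overlap_ge; auto; lra].
  destruct Hadj as [-> | ->].
  - pose proof (Mass l ltac:(lia)). destruct (prob_adjacent_ratios l j ltac:(lia) Hj) as [_ Down].
    rewrite Rmax_left by (left; apply hinc; lia). apply Rmin_ratio_lb; auto.
    + unfold Rdiv. rewrite Rinv_r by lra. nra.
    + rewrite Hth. apply Rmult_le_compat; lra.
  - pose proof (Mass k ltac:(lia)). destruct (prob_adjacent_ratios k j ltac:(lia) Hj) as [Up _].
    rewrite Rmax_right by (left; apply hinc; lia). apply Rmin_ratio_lb; auto.
    + nra.
    + unfold Rdiv at 2. rewrite Rinv_r, Rmult_1_r by lra. nra.
Qed.

End Theorem12.

Theorem mainTheorem12 (b c : R) (hb : 0 < b) (hc : 1 <= c)
  (M : nat) (hM : (1 <= M)%nat)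
  (a : R) (ha1 : 1/2 <= a) (ha2 : a < 1) (hac : a / (1 - a) <= c ^ M)
  (N : nat) (beta : nat -> R)
  (hinc : forall k, (k < N)%nat -> beta k < beta (S k))
  (hset : forall x, (exists k, (k <= N)%nat /\ x = beta k) <-> in_beta_set M x) :
  (forall k, (k < N)%nat -> prob M b a (beta k) 1 <= prob M b a (beta (S k)) 1)
  /\ 1/2 <= gammaA M b a N beta
  /\ (forall k l j, (k <= N)%nat -> (l <= N)%nat -> (k = S l \/ l = S k) ->
        (j = 1 \/ j = 2)%nat ->
        / (2 * c * sqrt (INR M)) <= overlap M b a (beta k) (beta l) j).
Proof.
  split; [|split].
  - intros k Hk. eapply prob_lower_nondecreasing; eassumption.
  - eapply gammaA_ge_half; eassumption.
  - intros k l j Hk Hl Hadj Hj.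
    assert (1 <= sqrt (INR M)) by (rewrite <- sqrt_1; apply sqrt_le_1_alt, (le_INR 1), hM).
    eapply Rle_trans; [|eapply overlap_adjacent_ge with (c := c); eassumption].
    apply Rinv_le_contravar; nra.
Qed.
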